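(* Assume Conditions A, B, C and D, let $G_0=g_0-F_0^*\zeta$, and for $n\in\mathbb N$ let $G_n=G_0/(1+\frac1n h(G_0))$. Then $G_n\in\mathcal D$ for every $n$.
   Context: Setting. $\mathcal I=(a,b)$, $-\infty\le a<b\le\infty$; $\mu,\sigma$ continuous on $\mathcal I$, $\sigma\neq0$; $X_0$ the regular diffusion $dX_0=\mu(X_0)dt+\sigma(X_0)dW$, $X_0(0)=x_0\in\mathcal I$. Scale density $s(x)=\exp(-\int^x2\mu/\sigma^2)$, scale function $S=\int s$, $S[y,z]=S(z)-S(y)$ ($dS$), speed density $m=1/(\sigma^2s)$, speed measure $M[y,z]=\int_y^z m$ ($dM$). Feller boundary classification; regular boundaries are reflecting or sticky; attainable means regular or exit. Condition A: $S(a,x]<\infty$, $S[x,b)=\infty$ for $x\in\mathcal I$ (so $a$ is regular/exit/natural, $b$ natural/entrance); if $a$ reflecting, $\lim_{x\to a}s(x)M[x,b)<\infty$; if $b$ natural, $M[y,b)<\infty$ for $y\in\mathcal I$; infinite boundaries are natural. $\mathcal E$ is $\mathcal I$ with $a$ added if attainable and $b$ added if entrance; $\overline{\mathcal E}$ its closure in $\mathbb R$; $\mathcal R=\{(y,z)\in\mathcal E^2:y<z\}$, $\overline{\mathcal R}=\{(y,z)\in\mathcal E^2:y\le z\}$. Condition B: (a) $c_0:\mathcal E\to[0,\infty)$ continuous; at natural boundaries $c_0(a)=\lim_{x\to a}c_0(x)$, $c_0(b)=\lim_{x\to b}c_0(x)$ exist in $[0,\infty]$, with $c_0(\pm\infty)=\infty$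 at infinite boundaries; $\int_y^bc_0\,dM<\infty$ for $y\in\mathcal I$; if $a$ reflecting, $\lim_{x\to a}s(x)\int_x^bc_0\,dM<\infty$. (b) $c_1:\overline{\mathcal R}\to[0,\infty]$ continuous, $c_1\ge k_1>0$, $c_1(\cdot,z)$ is $C^1$ near $a$ for $z\in\mathcal E\setminus\{a\}$, $c_1(y,\cdot)$ is $C^1$ near $b$ for $y\in\mathcal E\setminus\{b\}$. Operators: $Af=\frac{\sigma^2}{2}f''+\mu f'$, $Bf(y,z)=f(z)-f(y)$. Functions: $g_0(x)=\int_{x_0}^x\int_u^b2c_0\,dM\,dS(u)$, $\zeta(x)=\int_{x_0}^x2M[u,b)\,dS(u)$. $F_0(y,z)=\frac{c_1(y,z)+Bg_0(y,z)}{B\zeta(y,z)}$ on $\mathcal R$, $F_0(y,y)=\infty$, $F_0^*=\inf_{\overline{\mathcal R}}F_0$. Condition C: (a) $a$ is regular or exit, or $a$ is natural and either (i) $c_0(a)=\infty$, or (ii) $c_0(a)<\infty$, for each $z\in\mathcal E$ there is $y_z>a$ with $\frac{-\partial_yc_1(y,z)+g_0'(y)}{\zeta'(y)}>F_0(y,z)$ for $a<y<y_z$, and some $(\hat y,\hat z)\in\mathcal R$ has $F_0(\hat y,\hat z)<c_0(a)$; (b) $b$ is entrance, or $b$ is natural and either (i) $c_0(b)=\infty$, or (ii) $c_0(b)<\infty$, for each $y\in\mathcal E$ there is $z_y<b$ with $\frac{\partial_zc_1(y,z)+g_0'(z)}{\zeta'(z)}>F_0(y,z)$ for $z_y<z<b$,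 and some $(\tilde y,\tilde z)\in\mathcal R$ has $F_0(\tilde y,\tilde z)<c_0(b)$. Under Condition C, $G_0=g_0-F_0^*\zeta$ has limits $G_0(a),G_0(b)$ in $[-\infty,\infty]$. Condition D: (a) there are $L<\infty$, $y_1>a$ with (i) if $c_0(a)=\infty$: $\frac{c_0}{(1+|G_0|)^2}+\frac{(\sigma G_0')^2}{(1+|G_0|)^3}\le L$ on $(a,y_1)$; (ii) if $c_0(a)<\infty$: for some $\epsilon\in(0,1)$, $\frac{(\sigma G_0')^2}{(1+|G_0|)^{2+\epsilon}}\le L$ on $[a,y_1)$ (including the boundary limit); (b) there are $L<\infty$, $z_1<b$ with (i) if $c_0(b)=\infty$: $\frac{c_0}{(1+|G_0|)^2}+\frac{(\sigma G_0')^2}{(1+|G_0|)(1+c_0)}\le L$ on $(z_1,b)$; (ii) if $c_0(b)<\infty$: for some $\epsilon\in(0,1)$, $\frac{(\sigma G_0')^2}{(1+|G_0|)^{2+\epsilon}}+\frac{(\sigma G_0')^2}{(1+|G_0|)(1+c_0)}\le L$ on $(z_1,b]$; (c) if $G_0(a)>-\infty$, or $a$ is sticky with $c_0(a)<\infty$, then $\lim_{x\to a}\sigma(x)G_0'(x)$ exists and is finite; if $G_0(b)<\infty$ then $\lim_{x\to b}\sigma(x)G_0'(x)$ exists and is finite. Class $\mathcal D$: $f\in C(\overline{\mathcal E})\cap C^2(\mathcal I)$ such that for some $L_f<\infty$: $|f|\le L_f$, $(\sigma f')^2\le L_f(1+c_0)$, $|Af|\le L_f$; at each boundary where $c_0$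 is finite, $Af$ extends continuously to a finite value; if $a$ is reflecting, $|f'(a)|<\infty$; if $a$ is sticky and $c_0(a)<\infty$, $\sigma f'$ extends continuously at $a$ to a finite value. The function $h:\mathbb R\to\mathbb R$ is $h(x)=-\frac18x^4+\frac34x^2+\frac38$ for $|x|\le1$ and $h(x)=|x|$ for $|x|\ge1$. *)

From Stdlib Require Import Reals Lra ClassicalEpsilon.
Open Scope R_scope.

Inductive ereal : Type := Fin (r : R) | PInf | NInf.

Definition ereal_lt (x y : ereal) : Prop :=
  match x, y with
  | Fin u, Fin v => u < v
  | NInf, Fin _ | NInf, PInf | Fin _, PInf => True
  | _, _ => False
  end.
Definition ereal_le (x y : ereal) : Prop := ereal_lt x y \/ x = y.
Definition isfin (x : ereal) : Prop := exists r, x = Fin r.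
Definition real_of (x : ereal) : R := match x with Fin r => r | _ => 0 end.

(* Riemann integral int_y^z f (oriented); 0 if f is not Riemann integrable there. *)
Definition RInt (f : R -> R) (y z : R) : R :=
  match excluded_middle_informative (inhabited (Riemann_integrable f y z)) with
  | left H => RiemannInt (epsilon H (fun _ => True))
  | right _ => 0
  end.

Definition Dv (f : R -> R) (x : R) : R :=
  epsilon (inhabits 0) (fun d => derivable_pt_lim f x d).

Definition rderiv (U : R -> Prop) (f : R -> R) (y d : R) : Prop :=
  forall eps, 0 < eps -> exists delta, 0 < delta /\
    forall h, h <> 0 -> Rabs h < delta -> U (y + h) ->
      Rabs ((f (y + h) - f y) / h - d) < eps.

Definition relcont (U : R -> Prop) (f : R -> R) : Prop :=
  forall x, U x -> forall eps, 0 < eps -> exists delta, 0 < delta /\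
    forall y, U y -> Rabs (y - x) < delta -> Rabs (f y - f x) < eps.

Definition C1_on (U : R -> Prop) (f : R -> R) : Prop :=
  exists f', (forall y, U y -> rderiv U f y (f' y)) /\ relcont U f'.

Definition cont2e (U2 : R -> R -> Prop) (g : R -> R -> ereal) : Prop :=
  forall y z, U2 y z ->
  match g y z with
  | Fin v => forall eps, 0 < eps -> exists delta, 0 < delta /\
      forall y' z', U2 y' z' -> Rabs (y' - y) < delta -> Rabs (z' - z) < delta ->
        exists w, g y' z' = Fin w /\ Rabs (w - v) < eps
  | PInf => forall K, exists delta, 0 < delta /\
      forall y' z', U2 y' z' -> Rabs (y' - y) < delta -> Rabs (z' - z) < delta ->
        ereal_lt (Fin K) (g y' z')
  | NInf => forall K, exists delta, 0 < delta /\
      forall y' z', U2 y' z' -> Rabs (y' - y) < delta -> Rabs (z' - z) < delta ->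
        ereal_lt (g y' z') (Fin K)
  end.

Inductive btype : Type := Regular | Exit | Entrance | Natural.
(* Sg = Sigma-integral (finite iff attainable), N = N-integral *)
Definition btype_of (Sg N : ereal) : btype :=
  match Sg, N with
  | Fin _, Fin _ => Regular
  | Fin _, _ => Exit
  | _, Fin _ => Entrance
  | _, _ => Natural
  end.

Definition hfun (x : R) : R :=
  if Rle_dec (Rabs x) 1 then - / 8 * x ^ 4 + 3 / 4 * x ^ 2 + 3 / 8 else Rabs x.

Section Setting.
Variables (a b : ereal) (mu sigma : R -> R) (x0 : R) (stickya : bool).

Definition inI (x : R) : Prop := ereal_lt a (Fin x) /\ ereal_lt (Fin x) b.

Definition near_a (P : R -> Prop) : Prop :=
  exists y, inI y /\ forall x, inI x -> x < y -> P x.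
Definition near_b (P : R -> Prop) : Prop :=
  exists y, inI y /\ forall x, inI x -> y < x -> P x.

Definition lim_a (f : R -> R) (l : ereal) : Prop :=
  match l with
  | Fin r => forall eps, 0 < eps -> near_a (fun x => Rabs (f x - r) < eps)
  | PInf => forall K, near_a (fun x => K < f x)
  | NInf => forall K, near_a (fun x => f x < K)
  end.
Definition lim_b (f : R -> R) (l : ereal) : Prop :=
  match l with
  | Fin r => forall eps, 0 < eps -> near_b (fun x => Rabs (f x - r) < eps)
  | PInf => forall K, near_b (fun x => K < f x)
  | NInf => forall K, near_b (fun x => f x < K)
  end.
Definition limval_a (f : R -> R) : ereal := epsilon (inhabits PInf) (lim_a f).
Definition limval_b (f : R -> R) : ereal := epsilon (inhabits PInf) (lim_b f).

(* improper integrals int_a^x f and int_y^b f (used for nonnegative f only) *)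
Definition IntA (f : R -> R) (x : R) : ereal := limval_a (fun y => RInt f y x).
Definition IntB (f : R -> R) (y : R) : ereal := limval_b (fun z => RInt f y z).

Definition sdens (x : R) : R :=
  exp (- RInt (fun u => 2 * mu u / (sigma u) ^ 2) x0 x).
Definition mdens (x : R) : R := 1 / ((sigma x) ^ 2 * sdens x).

Definition Sigma_a : ereal := IntA (fun u => RInt mdens u x0 * sdens u) x0.
Definition N_a : ereal := IntA (fun u => RInt sdens u x0 * mdens u) x0.
Definition Sigma_b : ereal := IntB (fun u => RInt mdens x0 u * sdens u) x0.
Definition N_b : ereal := IntB (fun u => RInt sdens x0 u * mdens u) x0.
Definition cls_a : btype := btype_of Sigma_a N_a.
Definition cls_b : btype := btype_of Sigma_b N_b.

Definition attainable_a : Prop := cls_a = Regular \/ cls_a = Exit.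
Definition reflecting_a : Prop := cls_a = Regular /\ stickya = false.
Definition sticky_a : Prop := cls_a = Regular /\ stickya = true.

Definition inE (x : R) : Prop :=
  inI x \/ (a = Fin x /\ attainable_a) \/ (b = Fin x /\ cls_b = Entrance).
Definition inEbar (x : R) : Prop := ereal_le a (Fin x) /\ ereal_le (Fin x) b.
Definition inRbar (y z : R) : Prop := inE y /\ inE z /\ y <= z.

(* value at a point of Ebar of a function given on I (boundary values = limits) *)
Definition valE (f : R -> R) (x : R) : R :=
  match excluded_middle_informative (inI x) with
  | left _ => f x
  | right _ =>
      match excluded_middle_informative (a = Fin x) with
      | left _ => real_of (limval_a f)
      | right _ => real_of (limval_b f)
      end
  end.

Definition Condition_A : Prop :=
  (forall x, inI x -> isfin (IntA sdens x)) /\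
  (forall x, inI x -> IntB sdens x = PInf) /\
  (reflecting_a -> exists r, lim_a (fun x => sdens x * real_of (IntB mdens x)) (Fin r)) /\
  (cls_b = Natural -> forall y, inI y -> isfin (IntB mdens y)) /\
  (a = NInf -> cls_a = Natural) /\ (b = PInf -> cls_b = Natural).

Variables (c0 : R -> R) (c1 : R -> R -> ereal).

Definition c0A : ereal :=
  match cls_a with Regular | Exit => Fin (c0 (real_of a)) | _ => limval_a c0 end.
Definition c0B : ereal :=
  match cls_b with Entrance => Fin (c0 (real_of b)) | _ => limval_b c0 end.

Definition Condition_B : Prop :=
  relcont inE c0 /\ (forall x, inE x -> 0 <= c0 x) /\
  (cls_a = Natural -> exists l, lim_a c0 l) /\
  (cls_b = Natural -> exists l, lim_b c0 l) /\
  (a = NInf -> lim_a c0 PInf) /\ (b = PInf -> lim_b c0 PInf) /\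
  (forall y, inI y -> isfin (IntB (fun x => c0 x * mdens x) y)) /\
  (reflecting_a -> exists r,
      lim_a (fun x => sdens x * real_of (IntB (fun u => c0 u * mdens u) x)) (Fin r)) /\
  cont2e inRbar c1 /\
  (forall y z, inRbar y z -> c1 y z <> NInf) /\
  (exists k1, 0 < k1 /\ forall y z, inRbar y z -> ereal_le (Fin k1) (c1 y z)) /\
  (forall z, inE z -> a <> Fin z -> exists y1, inI y1 /\ y1 <= z /\
      (forall y, inE y -> y < y1 -> isfin (c1 y z)) /\
      C1_on (fun y => inE y /\ y < y1) (fun y => real_of (c1 y z))) /\
  (forall y, inE y -> b <> Fin y -> exists z1, inI z1 /\ y <= z1 /\
      (forall z, inE z -> z1 < z -> isfin (c1 y z)) /\
      C1_on (fun z => inE z /\ z1 < z) (fun z => real_of (c1 y z))).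

Definition g0 (x : R) : R :=
  RInt (fun u => real_of (IntB (fun v => 2 * c0 v * mdens v) u) * sdens u) x0 x.
Definition zeta (x : R) : R :=
  RInt (fun u => 2 * real_of (IntB mdens u) * sdens u) x0 x.

Definition F0 (y z : R) : ereal :=
  match Req_dec_T y z with
  | left _ => PInf
  | right _ =>
      match c1 y z with
      | Fin c => Fin ((c + (valE g0 z - valE g0 y)) / (valE zeta z - valE zeta y))
      | _ => PInf
      end
  end.

Definition F0_inf (v : ereal) : Prop :=
  (forall y z, inRbar y z -> ereal_le v (F0 y z)) /\
  (forall w, ereal_lt v w -> exists y z, inRbar y z /\ ereal_lt (F0 y z) w).

Definition Condition_C : Prop :=
  (attainable_a \/
   (cls_a = Natural /\
    (c0A = PInf \/
     (isfin c0A /\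
      (forall z, inE z -> exists yz, inI yz /\ yz <= z /\
         forall y, inI y -> y < yz ->
           ereal_lt (F0 y z)
             (Fin ((- Dv (fun y' => real_of (c1 y' z)) y + Dv g0 y) / Dv zeta y))) /\
      (exists yh zh, inE yh /\ inE zh /\ yh < zh /\ ereal_lt (F0 yh zh) c0A))))) /\
  (cls_b = Entrance \/
   (cls_b = Natural /\
    (c0B = PInf \/
     (isfin c0B /\
      (forall y, inE y -> exists zy, inI zy /\ y <= zy /\
         forall z, inI z -> zy < z ->
           ereal_lt (F0 y z)
             (Fin ((Dv (fun z' => real_of (c1 y z')) z + Dv g0 z) / Dv zeta z))) /\
      (exists yt zt, inE yt /\ inE zt /\ yt < zt /\ ereal_lt (F0 yt zt) c0B))))).

Variable Fs : R.

Definition G0 (x : R) : R := g0 x - Fs * zeta x.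

Definition Condition_D : Prop :=
  (exists L y1, inI y1 /\
    (c0A = PInf -> forall x, inI x -> x < y1 ->
       c0 x / (1 + Rabs (G0 x)) ^ 2
       + (sigma x * Dv G0 x) ^ 2 / (1 + Rabs (G0 x)) ^ 3 <= L) /\
    (isfin c0A -> exists eps, 0 < eps < 1 /\ forall x, inI x -> x < y1 ->
       (sigma x * Dv G0 x) ^ 2 / Rpower (1 + Rabs (G0 x)) (2 + eps) <= L)) /\
  (exists L z1, inI z1 /\
    (c0B = PInf -> forall x, inI x -> z1 < x ->
       c0 x / (1 + Rabs (G0 x)) ^ 2
       + (sigma x * Dv G0 x) ^ 2 / ((1 + Rabs (G0 x)) * (1 + c0 x)) <= L) /\
    (isfin c0B -> exists eps, 0 < eps < 1 /\ forall x, inI x -> z1 < x ->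
       (sigma x * Dv G0 x) ^ 2 / Rpower (1 + Rabs (G0 x)) (2 + eps)
       + (sigma x * Dv G0 x) ^ 2 / ((1 + Rabs (G0 x)) * (1 + c0 x)) <= L)) /\
  (((exists l, lim_a G0 l /\ l <> NInf) \/ (sticky_a /\ isfin c0A)) ->
     exists r, lim_a (fun x => sigma x * Dv G0 x) (Fin r)) /\
  ((exists l, lim_b G0 l /\ l <> PInf) ->
     exists r, lim_b (fun x => sigma x * Dv G0 x) (Fin r)).

Definition Agen (f : R -> R) (x : R) : R :=
  (sigma x) ^ 2 / 2 * Dv (Dv f) x + mu x * Dv f x.

(* the class D (f given on I; its values on Ebar \ I are its boundary limits) *)
Definition in_classD (f : R -> R) : Prop :=
  (forall x, inI x ->
     derivable_pt_lim f x (Dv f x) /\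
     derivable_pt_lim (Dv f) x (Dv (Dv f) x) /\
     continuity_pt (Dv (Dv f)) x) /\
  (* C(Ebar): continuous extension to the finite endpoints *)
  (forall r, a = Fin r -> exists v, lim_a f (Fin v)) /\
  (forall r, b = Fin r -> exists v, lim_b f (Fin v)) /\
  exists Lf,
    (forall x, inI x -> Rabs (f x) <= Lf) /\
    (forall x, inI x -> (sigma x * Dv f x) ^ 2 <= Lf * (1 + c0 x)) /\
    (forall x, inI x -> Rabs (Agen f x) <= Lf) /\
    (isfin c0A -> exists v, lim_a (Agen f) (Fin v)) /\
    (isfin c0B -> exists v, lim_b (Agen f) (Fin v)) /\
    (reflecting_a -> exists d, rderiv inEbar (valE f) (real_of a) d) /\
    ((sticky_a /\ isfin c0A) -> exists v, lim_a (fun x => sigma x * Dv f x) (Fin v)).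

Definition Gn (n : nat) (x : R) : R := G0 x / (1 + / INR n * hfun (G0 x)).

End Setting.

(* On I, G0 = g0 - F* zeta solves (sigma^2/2) G0'' + mu G0' = F* - c0, with
   G0' = 2 s (int_x^b c0 dM - F* M[x,b)).  G_n = Phi (G0) for Phi t = t / (1 + h(t)/n), a bounded
   smooth function with |Phi'(t)| <= K (1+|t|)^-2 and |Phi''(t)| <= K (1+|t|)^-3.  By the chain rule
   sigma G_n' = Phi'(G0) sigma G0' and A G_n = Phi'(G0) (F* - c0) + Phi''(G0) (sigma G0')^2 / 2, and
   Condition D bounds c0 and (sigma G0')^2 by powers of 1 + |G0| near the ends, so both are bounded
   on I.  Near each end G0 has a limit in [-oo, oo]: it is eventually monotone at a natural end,
   where c0 > F* by Condition C, and bounded at an attainable or entrance end.  Hence G_n has finite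
   boundary limits, A G_n converges (to 0 where |G0| -> oo), and at a reflecting end G_n' converges,
   which yields the one-sided derivative. *)

From Pilot Require Import Defs.
From Stdlib Require Import Reals Lra Psatz ClassicalEpsilon Classical.
From Coquelicot Require Import Coquelicot.
Open Scope R_scope.

Section Interval.
Variables a b : ereal.
Local Notation I := (inI a b).

Lemma inI_between x y z : I x -> I z -> x <= y <= z -> I y.
Proof. unfold inI, ereal_lt; destruct a, b; intuition lra. Qed.

Lemma inI_lower y z : I z -> ereal_lt a (Fin y) -> y <= z -> I y.
Proof. unfold inI, ereal_lt; destruct b; intros [? ?]; intuition lra. Qed.

Lemma inI_upper y z : I z -> ereal_lt (Fin y) b -> z <= y -> I y.
Proof. unfold inI, ereal_lt; destruct a; intros [? ?]; intuition lra. Qed.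

Lemma inI_open x : I x -> exists d, 0 < d /\ forall y, Rabs (y - x) < d -> I y.
Proof.
  unfold inI, ereal_lt; intros [H1 H2].
  destruct a as [ra| |], b as [rb| |]; try tauto.
  - exists (Rmin (x - ra) (rb - x)); split; [apply Rmin_glb_lt; lra|].
    intros y Hy; apply Rabs_def2 in Hy.
    pose proof (Rmin_l (x - ra) (rb - x)); pose proof (Rmin_r (x - ra) (rb - x)); split; lra.
  - exists (x - ra); split; [lra|]. intros y Hy; apply Rabs_def2 in Hy; lra.
  - exists (rb - x); split; [lra|]. intros y Hy; apply Rabs_def2 in Hy; lra.
  - exists 1; split; [lra|tauto].
Qed.

Lemma inI_exists_lt x : I x -> exists y, I y /\ y < x.
Proof.
  intros H; destruct (inI_open x H) as [d [Hd Hy]].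
  exists (x - d / 2); split; [apply Hy; rewrite Rabs_left; lra | lra].
Qed.

Lemma inI_exists_gt x : I x -> exists y, I y /\ x < y.
Proof.
  intros H; destruct (inI_open x H) as [d [Hd Hy]].
  exists (x + d / 2); split; [apply Hy; rewrite Rabs_right; lra | lra].
Qed.

Lemma near_a_ex P : near_a a b P -> exists x, I x /\ P x.
Proof. intros [y [Hy HP]]; destruct (inI_exists_lt y Hy) as [x [? ?]]; exists x; auto. Qed.

Lemma near_b_ex P : near_b a b P -> exists x, I x /\ P x.
Proof. intros [y [Hy HP]]; destruct (inI_exists_gt y Hy) as [x [? ?]]; exists x; auto. Qed.

Lemma near_a_lt y : I y -> near_a a b (fun x => x < y).
Proof. intros; exists y; split; auto. Qed.

Lemma near_b_gt y : I y -> near_b a b (fun x => y < x).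
Proof. intros; exists y; split; auto. Qed.

End Interval.

Section FilterlimR.
Context {T : Type} (F : (T -> Prop) -> Prop) {FF : Filter F}.

Lemma filterlim_Rplus (f g : T -> R) (l1 l2 : R) :
  filterlim f F (locally l1) -> filterlim g F (locally l2) ->
  filterlim (fun x => f x + g x) F (locally (l1 + l2)).
Proof.
  intros H1 H2. apply (filterlim_comp_2 f g Rplus H1 H2).
  exact (filterlim_plus (K := R_AbsRing) (V := R_NormedModule) l1 l2).
Qed.

Lemma filterlim_Rmult (f g : T -> R) (l1 l2 : R) :
  filterlim f F (locally l1) -> filterlim g F (locally l2) ->
  filterlim (fun x => f x * g x) F (locally (l1 * l2)).
Proof.
  intros H1 H2. apply (filterlim_comp_2 f g Rmult H1 H2).
  exact (filterlim_mult (K := R_AbsRing) l1 l2).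
Qed.

Lemma filterlim_continuity_pt_comp (f : T -> R) (phi : R -> R) (l : R) :
  filterlim f F (locally l) -> continuity_pt phi l ->
  filterlim (fun x => phi (f x)) F (locally (phi l)).
Proof.
  intros H1 H2. apply continuity_pt_filterlim in H2. exact (filterlim_comp _ _ _ f phi F _ _ H1 H2).
Qed.

End FilterlimR.

Section OneSidedLimits.
Context {a b : ereal} {x0 : R} (Hx0 : inI a b x0).
Local Notation I := (inI a b).

Lemma near_a_filter : ProperFilter (near_a a b).
Proof.
  constructor.
  - intros P HP; destruct (near_a_ex a b P HP) as [x [_ Px]]; exists x; exact Px.
  - constructor.
    + exists x0; split; auto.
    + intros P Q [y1 [Hy1 HP]] [y2 [Hy2 HQ]].
      exists (Rmin y1 y2); split.
      * unfold Rmin; destruct Rle_dec; auto.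
      * intros x Hx Hlt; pose proof (Rmin_l y1 y2); pose proof (Rmin_r y1 y2).
        split; [apply HP|apply HQ]; auto; lra.
    + intros P Q HPQ [y [Hy HP]]; exists y; split; auto.
Qed.

Lemma near_b_filter : ProperFilter (near_b a b).
Proof.
  constructor.
  - intros P HP; destruct (near_b_ex a b P HP) as [x [_ Px]]; exists x; exact Px.
  - constructor.
    + exists x0; split; auto.
    + intros P Q [y1 [Hy1 HP]] [y2 [Hy2 HQ]].
      exists (Rmax y1 y2); split.
      * unfold Rmax; destruct Rle_dec; auto.
      * intros x Hx Hlt; pose proof (Rmax_l y1 y2); pose proof (Rmax_r y1 y2).
        split; [apply HP|apply HQ]; auto; lra.
    + intros P Q HPQ [y [Hy HP]]; exists y; split; auto.
Qed.

#[local] Instance near_a_Filter : Filter (near_a a b) := filter_filter (ProperFilter := near_a_filter).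
#[local] Instance near_b_Filter : Filter (near_b a b) := filter_filter (ProperFilter := near_b_filter).

Lemma near_a_and P Q : near_a a b P -> near_a a b Q -> near_a a b (fun x => P x /\ Q x).
Proof. apply filter_and. Qed.
Lemma near_b_and P Q : near_b a b P -> near_b a b Q -> near_b a b (fun x => P x /\ Q x).
Proof. apply filter_and. Qed.

Lemma near_a_imp (P Q : R -> Prop) :
  (forall x, I x -> P x -> Q x) -> near_a a b P -> near_a a b Q.
Proof. intros H [y [Hy HP]]; exists y; split; auto. Qed.
Lemma near_b_imp (P Q : R -> Prop) :
  (forall x, I x -> P x -> Q x) -> near_b a b P -> near_b a b Q.
Proof. intros H [y [Hy HP]]; exists y; split; auto. Qed.

Lemma lim_a_filterlim f l : lim_a a b f (Fin l) <-> filterlim f (near_a a b) (locally l).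
Proof.
  rewrite filterlim_locally; simpl; split.
  - intros H eps; apply H; destruct eps; auto.
  - intros H eps Heps; apply (H (mkposreal eps Heps)).
Qed.
Lemma lim_b_filterlim f l : lim_b a b f (Fin l) <-> filterlim f (near_b a b) (locally l).
Proof.
  rewrite filterlim_locally; simpl; split.
  - intros H eps; apply H; destruct eps; auto.
  - intros H eps Heps; apply (H (mkposreal eps Heps)).
Qed.

Lemma lim_a_unique f l1 l2 : lim_a a b f l1 -> lim_a a b f l2 -> l1 = l2.
Proof.
  assert (Hnear : forall P Q, near_a a b P -> near_a a b Q -> exists x, P x /\ Q x).
  { intros P Q HP HQ; destruct (near_a_ex a b _ (near_a_and P Q HP HQ)) as [x [_ H]]; eauto. }
  destruct l1 as [r1| |], l2 as [r2| |]; simpl; intros H1 H2; auto.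
  1: destruct (Req_dec r1 r2) as [->|Hne]; [reflexivity|].
  all: exfalso.
  - assert (He : 0 < Rabs (r1 - r2) / 2) by (assert (r1 - r2 <> 0) by lra; pose proof (Rabs_pos_lt _ H); lra).
    destruct (Hnear _ _ (H1 _ He) (H2 _ He)) as [x [A B]].
    pose proof (Rabs_triang (f x - r2) (- (f x - r1))) as T. rewrite Rabs_Ropp in T.
    replace (f x - r2 + - (f x - r1)) with (r1 - r2) in T by ring. lra.
  - destruct (Hnear _ _ (H1 1 Rlt_0_1) (H2 (r1 + 1))) as [x [A B]]; apply Rabs_def2 in A; lra.
  - destruct (Hnear _ _ (H1 1 Rlt_0_1) (H2 (r1 - 1))) as [x [A B]]; apply Rabs_def2 in A; lra.
  - destruct (Hnear _ _ (H2 1 Rlt_0_1) (H1 (r2 + 1))) as [x [A B]]; apply Rabs_def2 in A; lra.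
  - destruct (Hnear _ _ (H1 0) (H2 0)) as [x [A B]]; lra.
  - destruct (Hnear _ _ (H2 1 Rlt_0_1) (H1 (r2 - 1))) as [x [A B]]; apply Rabs_def2 in A; lra.
  - destruct (Hnear _ _ (H1 0) (H2 0)) as [x [A B]]; lra.
Qed.

Lemma lim_b_unique f l1 l2 : lim_b a b f l1 -> lim_b a b f l2 -> l1 = l2.
Proof.
  assert (Hnear : forall P Q, near_b a b P -> near_b a b Q -> exists x, P x /\ Q x).
  { intros P Q HP HQ; destruct (near_b_ex a b _ (near_b_and P Q HP HQ)) as [x [_ H]]; eauto. }
  destruct l1 as [r1| |], l2 as [r2| |]; simpl; intros H1 H2; auto.
  1: destruct (Req_dec r1 r2) as [->|Hne]; [reflexivity|].
  all: exfalso.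
  - assert (He : 0 < Rabs (r1 - r2) / 2) by (assert (r1 - r2 <> 0) by lra; pose proof (Rabs_pos_lt _ H); lra).
    destruct (Hnear _ _ (H1 _ He) (H2 _ He)) as [x [A B]].
    pose proof (Rabs_triang (f x - r2) (- (f x - r1))) as T. rewrite Rabs_Ropp in T.
    replace (f x - r2 + - (f x - r1)) with (r1 - r2) in T by ring. lra.
  - destruct (Hnear _ _ (H1 1 Rlt_0_1) (H2 (r1 + 1))) as [x [A B]]; apply Rabs_def2 in A; lra.
  - destruct (Hnear _ _ (H1 1 Rlt_0_1) (H2 (r1 - 1))) as [x [A B]]; apply Rabs_def2 in A; lra.
  - destruct (Hnear _ _ (H2 1 Rlt_0_1) (H1 (r2 + 1))) as [x [A B]]; apply Rabs_def2 in A; lra.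
  - destruct (Hnear _ _ (H1 0) (H2 0)) as [x [A B]]; lra.
  - destruct (Hnear _ _ (H2 1 Rlt_0_1) (H1 (r2 - 1))) as [x [A B]]; apply Rabs_def2 in A; lra.
  - destruct (Hnear _ _ (H1 0) (H2 0)) as [x [A B]]; lra.
Qed.

Lemma limval_a_eq f l : lim_a a b f l -> limval_a a b f = l.
Proof. intros H; unfold limval_a; apply (lim_a_unique f); [apply epsilon_spec; exists l|]; auto. Qed.
Lemma limval_b_eq f l : lim_b a b f l -> limval_b a b f = l.
Proof. intros H; unfold limval_b; apply (lim_b_unique f); [apply epsilon_spec; exists l|]; auto. Qed.

Lemma lim_a_ext f g l : (forall x, I x -> f x = g x) -> lim_a a b f l -> lim_a a b g l.
Proof.
  intros E; destruct l; simpl; intros H.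
  - intros eps He; apply (near_a_imp _ _ (fun x Hx P => eq_ind _ (fun v => Rabs (v - r) < eps) P _ (E x Hx)) (H eps He)).
  - intros K; apply (near_a_imp _ _ (fun x Hx P => eq_ind _ (fun v => K < v) P _ (E x Hx)) (H K)).
  - intros K; apply (near_a_imp _ _ (fun x Hx P => eq_ind _ (fun v => v < K) P _ (E x Hx)) (H K)).
Qed.
Lemma lim_b_ext f g l : (forall x, I x -> f x = g x) -> lim_b a b f l -> lim_b a b g l.
Proof.
  intros E; destruct l; simpl; intros H.
  - intros eps He; apply (near_b_imp _ _ (fun x Hx P => eq_ind _ (fun v => Rabs (v - r) < eps) P _ (E x Hx)) (H eps He)).
  - intros K; apply (near_b_imp _ _ (fun x Hx P => eq_ind _ (fun v => K < v) P _ (E x Hx)) (H K)).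
  - intros K; apply (near_b_imp _ _ (fun x Hx P => eq_ind _ (fun v => v < K) P _ (E x Hx)) (H K)).
Qed.

Definition ereal_opp (l : ereal) : ereal :=
  match l with Fin r => Fin (- r) | PInf => NInf | NInf => PInf end.

Lemma lim_a_opp f l : lim_a a b (fun x => - f x) l -> lim_a a b f (ereal_opp l).
Proof.
  destruct l; simpl; intros H.
  - intros eps He. apply (near_a_imp (fun x => Rabs (- f x - r) < eps)); [|apply H; auto].
    intros x _ P. replace (f x - - r) with (- (- f x - r)) by ring. rewrite Rabs_Ropp; auto.
  - intros K; apply (near_a_imp (fun x => - K < - f x)); [intros; lra|apply H].
  - intros K; apply (near_a_imp (fun x => - f x < - K)); [intros; lra|apply H].
Qed.
Lemma lim_b_opp f l : lim_b a b (fun x => - f x) l -> lim_b a b f (ereal_opp l).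
Proof.
  destruct l; simpl; intros H.
  - intros eps He. apply (near_b_imp (fun x => Rabs (- f x - r) < eps)); [|apply H; auto].
    intros x _ P. replace (f x - - r) with (- (- f x - r)) by ring. rewrite Rabs_Ropp; auto.
  - intros K; apply (near_b_imp (fun x => - K < - f x)); [intros; lra|apply H].
  - intros K; apply (near_b_imp (fun x => - f x < - K)); [intros; lra|apply H].
Qed.

Lemma lim_a_plus f g l1 l2 :
  lim_a a b f (Fin l1) -> lim_a a b g (Fin l2) -> lim_a a b (fun x => f x + g x) (Fin (l1 + l2)).
Proof. rewrite !lim_a_filterlim; apply (filterlim_Rplus _). Qed.
Lemma lim_b_plus f g l1 l2 :
  lim_b a b f (Fin l1) -> lim_b a b g (Fin l2) -> lim_b a b (fun x => f x + g x) (Fin (l1 + l2)).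
Proof. rewrite !lim_b_filterlim; apply (filterlim_Rplus _). Qed.
Lemma lim_a_mult f g l1 l2 :
  lim_a a b f (Fin l1) -> lim_a a b g (Fin l2) -> lim_a a b (fun x => f x * g x) (Fin (l1 * l2)).
Proof. rewrite !lim_a_filterlim; apply (filterlim_Rmult _). Qed.
Lemma lim_b_mult f g l1 l2 :
  lim_b a b f (Fin l1) -> lim_b a b g (Fin l2) -> lim_b a b (fun x => f x * g x) (Fin (l1 * l2)).
Proof. rewrite !lim_b_filterlim; apply (filterlim_Rmult _). Qed.
Lemma lim_a_const c : lim_a a b (fun _ => c) (Fin c).
Proof. rewrite lim_a_filterlim; apply (filterlim_const (F := _)). Qed.
Lemma lim_b_const c : lim_b a b (fun _ => c) (Fin c).
Proof. rewrite lim_b_filterlim; apply (filterlim_const (F := _)). Qed.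
Lemma lim_a_comp f phi l :
  lim_a a b f (Fin l) -> continuity_pt phi l -> lim_a a b (fun x => phi (f x)) (Fin (phi l)).
Proof. rewrite !lim_a_filterlim; apply (filterlim_continuity_pt_comp _). Qed.
Lemma lim_b_comp f phi l :
  lim_b a b f (Fin l) -> continuity_pt phi l -> lim_b a b (fun x => phi (f x)) (Fin (phi l)).
Proof. rewrite !lim_b_filterlim; apply (filterlim_continuity_pt_comp _). Qed.

Lemma lim_a_fin_near_le f c : lim_a a b f (Fin c) -> near_a a b (fun x => f x <= Rabs c + 1).
Proof.
  intros H. apply (near_a_imp (fun x => Rabs (f x - c) < 1)); [|apply H; lra].
  intros x _ Hx. apply Rabs_def2 in Hx. pose proof (Rle_abs c). lra.
Qed.
Lemma lim_b_fin_near_le f c : lim_b a b f (Fin c) -> near_b a b (fun x => f x <= Rabs c + 1).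
Proof.
  intros H. apply (near_b_imp (fun x => Rabs (f x - c) < 1)); [|apply H; lra].
  intros x _ Hx. apply Rabs_def2 in Hx. pose proof (Rle_abs c). lra.
Qed.

Lemma lim_a_infinite_abs_large f l : lim_a a b f l -> l = PInf \/ l = NInf ->
  forall M, near_a a b (fun x => M < 1 + Rabs (f x)).
Proof.
  intros Hl [->| ->] M; simpl in Hl.
  - apply (near_a_imp (fun x => M < f x)); [|apply Hl]. intros x _ H. pose proof (Rle_abs (f x)); lra.
  - apply (near_a_imp (fun x => f x < - M)); [|apply Hl]. intros x _ H. pose proof (Rabs_maj2 (f x)); lra.
Qed.
Lemma lim_b_infinite_abs_large f l : lim_b a b f l -> l = PInf \/ l = NInf ->
  forall M, near_b a b (fun x => M < 1 + Rabs (f x)).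
Proof.
  intros Hl [->| ->] M; simpl in Hl.
  - apply (near_b_imp (fun x => M < f x)); [|apply Hl]. intros x _ H. pose proof (Rle_abs (f x)); lra.
  - apply (near_b_imp (fun x => f x < - M)); [|apply Hl]. intros x _ H. pose proof (Rabs_maj2 (f x)); lra.
Qed.

Lemma lim_a_ge g c L : near_a a b (fun x => c <= g x) -> lim_a a b g (Fin L) -> c <= L.
Proof.
  intros H1 H2. destruct (Rle_dec c L) as [|Hn]; auto. exfalso.
  assert (He : 0 < c - L) by lra.
  destruct (near_a_ex a b _ (near_a_and _ _ H1 (H2 _ He))) as [x [_ [A B]]].
  apply Rabs_def2 in B; lra.
Qed.
Lemma lim_b_ge g c L : near_b a b (fun x => c <= g x) -> lim_b a b g (Fin L) -> c <= L.
Proof.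
  intros H1 H2. destruct (Rle_dec c L) as [|Hn]; auto. exfalso.
  assert (He : 0 < c - L) by lra.
  destruct (near_b_ex a b _ (near_b_and _ _ H1 (H2 _ He))) as [x [_ [A B]]].
  apply Rabs_def2 in B; lra.
Qed.
Lemma lim_b_le g c L : near_b a b (fun x => g x <= c) -> lim_b a b g (Fin L) -> L <= c.
Proof.
  intros H1 H2. destruct (Rle_dec L c) as [|Hn]; auto. exfalso.
  assert (He : 0 < L - c) by lra.
  destruct (near_b_ex a b _ (near_b_and _ _ H1 (H2 _ He))) as [x [_ [A B]]].
  apply Rabs_def2 in B; lra.
Qed.

Lemma lim_a_neq_NInf f l c : lim_a a b f l -> near_a a b (fun x => c <= f x) -> l <> NInf.
Proof.
  intros H1 H2 ->. destruct (near_a_ex a b _ (near_a_and _ _ H2 (H1 c))) as [x [_ [A B]]]; lra.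
Qed.
Lemma lim_b_neq_NInf f l c : lim_b a b f l -> near_b a b (fun x => c <= f x) -> l <> NInf.
Proof.
  intros H1 H2 ->. destruct (near_b_ex a b _ (near_b_and _ _ H2 (H1 c))) as [x [_ [A B]]]; lra.
Qed.
Lemma lim_b_neq_PInf f l c : lim_b a b f l -> near_b a b (fun x => f x <= c) -> l <> PInf.
Proof.
  intros H1 H2 ->. destruct (near_b_ex a b _ (near_b_and _ _ H2 (H1 c))) as [x [_ [A B]]]; lra.
Qed.

Lemma lim_a_nondecreasing f y2 : I y2 ->
  (forall x y, I x -> I y -> x <= y -> y < y2 -> f x <= f y) ->
  exists l, lim_a a b f l /\ l <> PInf.
Proof.
  intros Hy2 Hm.
  set (E := fun v => exists x, I x /\ x < y2 /\ v = - f x).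
  destruct (classic (exists m, is_upper_bound E m)) as [[m Hm0]|Hnb].
  - assert (HE : exists v, E v).
    { destruct (inI_exists_lt a b y2 Hy2) as [x [? ?]]. exists (- f x), x; auto. }
    destruct (completeness E (ex_intro _ m Hm0) HE) as [s [Hs1 Hs2]].
    exists (Fin (- s)); split; [|discriminate]. simpl; intros eps Heps.
    destruct (classic (exists x, I x /\ x < y2 /\ s - eps < - f x)) as [[xs [Hxs [Hxs2 Hxs3]]]|Hn].
    + exists xs; split; auto. intros x Hx Hlt.
      assert (f x <= f xs) by (apply Hm; auto; lra).
      assert (- f x <= s) by (apply Hs1; exists x; split; [assumption|split; [lra|reflexivity]]).
      apply Rabs_def1; lra.
    + exfalso. assert (is_upper_bound E (s - eps)).
      { intros v [x [Hx [Hx2 ->]]]. destruct (Rle_dec (- f x) (s - eps)); auto.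
        exfalso; apply Hn; exists x; split; [assumption|split; lra]. }
      specialize (Hs2 _ H); lra.
  - exists NInf; split; [|discriminate]. simpl; intros K.
    destruct (classic (exists x, I x /\ x < y2 /\ f x < K)) as [[xs [Hxs [Hxs2 Hxs3]]]|Hn].
    + exists xs; split; auto. intros x Hx Hlt.
      assert (f x <= f xs) by (apply Hm; auto; lra). lra.
    + exfalso; apply Hnb; exists (- K). intros v [x [Hx [Hx2 ->]]].
      destruct (Rle_dec K (f x)); [lra|]. exfalso; apply Hn; exists x; split; [assumption|split; lra].
Qed.

Lemma lim_b_nondecreasing f z2 : I z2 ->
  (forall x y, I x -> I y -> x <= y -> z2 < x -> f x <= f y) ->
  exists l, lim_b a b f l /\ l <> NInf.
Proof.
  intros Hz2 Hm.
  set (E := fun v => exists x, I x /\ z2 < x /\ v = f x).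
  destruct (classic (exists m, is_upper_bound E m)) as [[m Hm0]|Hnb].
  - assert (HE : exists v, E v).
    { destruct (inI_exists_gt a b z2 Hz2) as [x [? ?]]. exists (f x), x; auto. }
    destruct (completeness E (ex_intro _ m Hm0) HE) as [s [Hs1 Hs2]].
    exists (Fin s); split; [|discriminate]. simpl; intros eps Heps.
    destruct (classic (exists x, I x /\ z2 < x /\ s - eps < f x)) as [[xs [Hxs [Hxs2 Hxs3]]]|Hn].
    + exists xs; split; auto. intros x Hx Hlt.
      assert (f xs <= f x) by (apply Hm; auto; lra).
      assert (f x <= s) by (apply Hs1; exists x; split; [assumption|split; [lra|reflexivity]]).
      apply Rabs_def1; lra.
    + exfalso. assert (is_upper_bound E (s - eps)).
      { intros v [x [Hx [Hx2 ->]]]. destruct (Rle_dec (f x) (s - eps)); auto.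
        exfalso; apply Hn; exists x; split; [assumption|split; lra]. }
      specialize (Hs2 _ H); lra.
  - exists PInf; split; [|discriminate]. simpl; intros K.
    destruct (classic (exists x, I x /\ z2 < x /\ K < f x)) as [[xs [Hxs [Hxs2 Hxs3]]]|Hn].
    + exists xs; split; auto. intros x Hx Hlt.
      assert (f xs <= f x) by (apply Hm; auto; lra). lra.
    + exfalso; apply Hnb; exists K. intros v [x [Hx [Hx2 ->]]].
      destruct (Rle_dec (f x) K); [lra|]. exfalso; apply Hn; exists x; split; [assumption|split; lra].
Qed.

Lemma lim_a_nonincreasing f y2 : I y2 ->
  (forall x y, I x -> I y -> x <= y -> y < y2 -> f y <= f x) ->
  exists l, lim_a a b f l /\ l <> NInf.
Proof.
  intros Hy2 Hm. destruct (lim_a_nondecreasing (fun x => - f x) y2 Hy2) as [l [Hl Hn]].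
  { intros x y H1 H2 H3 H4; specialize (Hm x y H1 H2 H3 H4); lra. }
  apply lim_a_opp in Hl. eexists; split; [exact Hl|]. destruct l; try discriminate; congruence.
Qed.

Lemma lim_b_nonincreasing f z2 : I z2 ->
  (forall x y, I x -> I y -> x <= y -> z2 < x -> f y <= f x) ->
  exists l, lim_b a b f l /\ l <> PInf.
Proof.
  intros Hz2 Hm. destruct (lim_b_nondecreasing (fun x => - f x) z2 Hz2) as [l [Hl Hn]].
  { intros x y H1 H2 H3 H4; specialize (Hm x y H1 H2 H3 H4); lra. }
  apply lim_b_opp in Hl. eexists; split; [exact Hl|]. destruct l; try discriminate; congruence.
Qed.

Lemma lim_a_fin_of_nondecreasing_bounded f y2 B : I y2 ->
  (forall x y, I x -> I y -> x <= y -> y < y2 -> f x <= f y) ->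
  (forall x, I x -> x < y2 -> B <= f x) -> exists v, lim_a a b f (Fin v).
Proof.
  intros Hy2 Hm Hb. destruct (lim_a_nondecreasing f y2 Hy2 Hm) as [[v| |] [Hl Hn]]; eauto.
  - congruence.
  - exfalso. refine (lim_a_neq_NInf f NInf B Hl _ eq_refl). exists y2; split; auto.
Qed.
Lemma lim_b_fin_of_nondecreasing_bounded f z2 B : I z2 ->
  (forall x y, I x -> I y -> x <= y -> z2 < x -> f x <= f y) ->
  (forall x, I x -> z2 < x -> f x <= B) -> exists v, lim_b a b f (Fin v).
Proof.
  intros Hz2 Hm Hb. destruct (lim_b_nondecreasing f z2 Hz2 Hm) as [[v| |] [Hl Hn]]; eauto.
  - exfalso. refine (lim_b_neq_PInf f PInf B Hl _ eq_refl). exists z2; split; auto.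
  - congruence.
Qed.

Lemma le_lim_b_of_nondecreasing f z2 L : I z2 ->
  (forall x y, I x -> I y -> x <= y -> z2 < x -> f x <= f y) ->
  lim_b a b f (Fin L) -> forall x, I x -> z2 < x -> f x <= L.
Proof.
  intros Hz2 Hm Hl x Hx Hzx. apply (lim_b_ge f); auto.
  exists x; split; auto. intros y Hy Hxy. apply Hm; auto; lra.
Qed.
Lemma le_lim_a_of_nonincreasing f y2 L : I y2 ->
  (forall x y, I x -> I y -> x <= y -> y < y2 -> f y <= f x) ->
  lim_a a b f (Fin L) -> forall x, I x -> x < y2 -> f x <= L.
Proof.
  intros Hy2 Hm Hl x Hx Hxy. apply (lim_a_ge f); auto.
  exists x; split; auto. intros y Hy Hyx. apply Hm; auto; lra.
Qed.

End OneSidedLimits.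

Lemma locally_of_Rabs (x : R) (P : R -> Prop) :
  (exists d, 0 < d /\ forall z, Rabs (z - x) < d -> P z) -> locally x P.
Proof. intros [d [Hd H]]; exists (mkposreal d Hd); intros z Hz; apply H; exact Hz. Qed.

Lemma Dv_eq f x d : derivable_pt_lim f x d -> Dv f x = d.
Proof.
  intros H; unfold Dv. apply (uniqueness_limite f x); [|exact H].
  apply epsilon_spec; exists d; exact H.
Qed.

Lemma derivable_pt_lim_eq_val f x l l' : l = l' -> derivable_pt_lim f x l -> derivable_pt_lim f x l'.
Proof. intros ->; auto. Qed.

Lemma derivable_pt_lim_plus' f g x l1 l2 : derivable_pt_lim f x l1 -> derivable_pt_lim g x l2 ->
  derivable_pt_lim (fun t => f t + g t) x (l1 + l2).
Proof. apply derivable_pt_lim_plus. Qed.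
Lemma derivable_pt_lim_minus' f g x l1 l2 : derivable_pt_lim f x l1 -> derivable_pt_lim g x l2 ->
  derivable_pt_lim (fun t => f t - g t) x (l1 - l2).
Proof. apply derivable_pt_lim_minus. Qed.
Lemma derivable_pt_lim_mult' f g x l1 l2 : derivable_pt_lim f x l1 -> derivable_pt_lim g x l2 ->
  derivable_pt_lim (fun t => f t * g t) x (l1 * g x + f x * l2).
Proof. apply derivable_pt_lim_mult. Qed.
Lemma derivable_pt_lim_scal' c f x l : derivable_pt_lim f x l -> derivable_pt_lim (fun t => c * f t) x (c * l).
Proof. apply derivable_pt_lim_scal. Qed.

Lemma derivable_pt_lim_loc f g x l : (exists d, 0 < d /\ forall z, Rabs (z - x) < d -> f z = g z) ->
  derivable_pt_lim g x l -> derivable_pt_lim f x l.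
Proof.
  intros [d [Hd E]] H eps He. destruct (H eps He) as [del Hdel].
  assert (Hm : 0 < Rmin d del) by (apply Rmin_glb_lt; [lra|destruct del; simpl; lra]).
  exists (mkposreal _ Hm). intros h Hh Hlt. simpl in Hlt.
  pose proof (Rmin_l d del); pose proof (Rmin_r d del).
  rewrite !E; [apply Hdel; auto; lra| |].
  - rewrite Rminus_diag, Rabs_R0; lra.
  - replace (x + h - x) with h by ring. lra.
Qed.

Lemma continuity_pt_loc f g x : (exists d, 0 < d /\ forall z, Rabs (z - x) < d -> f z = g z) ->
  continuity_pt g x -> continuity_pt f x.
Proof.
  intros [d [Hd E]] H. apply continuity_pt_locally. intros eps.
  apply continuity_pt_locally with (eps := eps) in H. destruct H as [e1 He1].
  apply locally_of_Rabs. exists (Rmin d e1); split; [apply Rmin_glb_lt; [lra|apply cond_pos]|].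
  intros z Hz. pose proof (Rmin_l d e1); pose proof (Rmin_r d e1).
  rewrite !E; [apply He1; change (Rabs (z - x) < e1); lra| |].
  - rewrite Rminus_diag, Rabs_R0; lra.
  - lra.
Qed.

Lemma derivable_pt_lim_glue f g1 g2 c l d : 0 < d ->
  (forall z, c <= z < c + d -> f z = g1 z) -> (forall z, c - d < z <= c -> f z = g2 z) ->
  derivable_pt_lim g1 c l -> derivable_pt_lim g2 c l -> derivable_pt_lim f c l.
Proof.
  intros Hd E1 E2 H1 H2 eps He.
  destruct (H1 eps He) as [d1 Hd1]. destruct (H2 eps He) as [d2 Hd2].
  assert (Hm : 0 < Rmin d (Rmin d1 d2)) by (repeat apply Rmin_glb_lt; try lra; apply cond_pos).
  exists (mkposreal _ Hm). intros h Hh Hlt; simpl in Hlt.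
  pose proof (Rmin_l d (Rmin d1 d2)); pose proof (Rmin_r d (Rmin d1 d2)).
  pose proof (Rmin_l d1 d2); pose proof (Rmin_r d1 d2).
  apply Rabs_def2 in Hlt as Hl2.
  destruct (Rle_dec 0 h).
  - rewrite (E1 c), (E1 (c + h)) by lra. apply Hd1; auto. lra.
  - rewrite (E2 c), (E2 (c + h)) by lra. apply Hd2; auto. lra.
Qed.

Lemma continuity_pt_glue f g1 g2 c d : 0 < d ->
  (forall z, c <= z < c + d -> f z = g1 z) -> (forall z, c - d < z <= c -> f z = g2 z) ->
  continuity_pt g1 c -> continuity_pt g2 c -> continuity_pt f c.
Proof.
  intros Hd E1 E2 H1 H2. apply continuity_pt_locally. intros eps.
  apply continuity_pt_locally with (eps := eps) in H1. destruct H1 as [e1 He1].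
  apply continuity_pt_locally with (eps := eps) in H2. destruct H2 as [e2 He2].
  apply locally_of_Rabs. exists (Rmin d (Rmin e1 e2)); split.
  { repeat apply Rmin_glb_lt; try lra; apply cond_pos. }
  intros z Hz.
  pose proof (Rmin_l d (Rmin e1 e2)); pose proof (Rmin_r d (Rmin e1 e2)).
  pose proof (Rmin_l e1 e2); pose proof (Rmin_r e1 e2).
  apply Rabs_def2 in Hz as Hz2.
  destruct (Rle_dec c z).
  - rewrite (E1 c), (E1 z) by lra. apply He1. change (Rabs (z - c) < e1). apply Rabs_def1; lra.
  - rewrite (E2 c), (E2 z) by lra. apply He2. change (Rabs (z - c) < e2). apply Rabs_def1; lra.
Qed.

Lemma continuity_pt_pow f n x : continuity_pt f x -> continuity_pt (fun y => f y ^ n) x.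
Proof.
  intros H. induction n.
  - apply continuity_pt_const; intros ? ?; auto.
  - apply (continuity_pt_mult f (fun y => f y ^ n)); auto.
Qed.

Section CalculusOnI.
Variables a b : ereal.
Local Notation I := (inI a b).

Definition contI (f : R -> R) := forall x, I x -> continuity_pt f x.

Lemma contI_plus f g : contI f -> contI g -> contI (fun x => f x + g x).
Proof. intros Hf Hg x Hx. apply (continuity_pt_plus f g); auto. Qed.
Lemma contI_minus f g : contI f -> contI g -> contI (fun t => f t - g t).
Proof. intros Hf Hg x Hx. apply (continuity_pt_minus f g); auto. Qed.
Lemma contI_mult f g : contI f -> contI g -> contI (fun x => f x * g x).
Proof. intros Hf Hg x Hx. apply (continuity_pt_mult f g); auto. Qed.
Lemma contI_opp f : contI f -> contI (fun t => - f t).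
Proof. intros Hf x Hx. apply (continuity_pt_opp f); auto. Qed.
Lemma contI_const c : contI (fun _ => c).
Proof. intros x Hx. apply continuity_pt_const; intros ? ?; auto. Qed.

Lemma contI_of_derivable F F' : (forall x, I x -> derivable_pt_lim F x (F' x)) -> contI F.
Proof. intros H x Hx. apply derivable_continuous_pt. exists (F' x). apply H; auto. Qed.

Lemma MVT_I F F' y z : (forall x, I x -> derivable_pt_lim F x (F' x)) ->
  I y -> I z -> y < z -> exists c, y < c < z /\ F z - F y = F' c * (z - y).
Proof.
  intros HD Hy Hz Hyz. destruct (MVT_cor2 F F' y z Hyz) as [c [E Hc]].
  - intros c Hc; apply HD; apply (inI_between a b y c z); auto.
  - exists c; auto.
Qed.

Lemma le_of_derive_nonneg F F' y z : (forall x, I x -> derivable_pt_lim F x (F' x)) ->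
  I y -> I z -> y <= z -> (forall c, y < c < z -> 0 <= F' c) -> F y <= F z.
Proof.
  intros HD Hy Hz Hyz Hp. destruct (Req_dec y z) as [->|Hne]; [lra|].
  destruct (MVT_I F F' y z HD Hy Hz) as [c [Hc E]]; [lra|].
  specialize (Hp c Hc). nra.
Qed.

Lemma eq_of_derive_zero F F' y z : (forall x, I x -> derivable_pt_lim F x (F' x)) ->
  I y -> I z -> (forall c, I c -> F' c = 0) -> F y = F z.
Proof.
  intros HD Hy Hz H0.
  destruct (Rtotal_order y z) as [Hl|[->|Hl]]; auto.
  - destruct (MVT_I F F' y z HD Hy Hz Hl) as [c [Hc E]].
    rewrite H0 in E by (apply (inI_between a b y c z); auto; lra). lra.
  - destruct (MVT_I F F' z y HD Hz Hy Hl) as [c [Hc E]].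
    rewrite H0 in E by (apply (inI_between a b z c y); auto; lra). lra.
Qed.

Lemma increment_le_of_derive_le F F' G G' y z : (forall x, I x -> derivable_pt_lim F x (F' x)) ->
  (forall x, I x -> derivable_pt_lim G x (G' x)) -> I y -> I z -> y <= z ->
  (forall c, y < c < z -> F' c <= G' c) -> F z - F y <= G z - G y.
Proof.
  intros HF HG Hy Hz Hyz H.
  enough (G y - F y <= G z - F z) by lra.
  apply (le_of_derive_nonneg (fun t => G t - F t) (fun t => G' t - F' t)); auto.
  - intros x Hx. apply derivable_pt_lim_minus; auto.
  - intros c Hc; specialize (H c Hc); lra.
Qed.

Lemma RInt_eq_RInt f y z : contI f -> I y -> I z -> ex_RInt f y z /\ Defs.RInt f y z = RInt f y z.
Proof.
  intros Hf Hy Hz.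
  assert (Hex : ex_RInt f y z).
  { apply (ex_RInt_continuous (V := R_CompleteNormedModule)). intros w Hw.
    apply continuity_pt_filterlim. apply Hf.
    destruct (Rle_dec y z).
    - rewrite Rmin_left, Rmax_right in Hw by lra. apply (inI_between a b y w z); auto.
    - rewrite Rmin_right, Rmax_left in Hw by lra. apply (inI_between a b z w y); auto. }
  split; auto. unfold Defs.RInt. destruct excluded_middle_informative as [Hi|Hn].
  - rewrite (RInt_Reals f y z (epsilon Hi (fun _ => True))). reflexivity.
  - exfalso; apply Hn; constructor; apply ex_RInt_Reals_0; auto.
Qed.

Lemma RInt_derive_upper f y x : contI f -> I y -> I x ->
  derivable_pt_lim (fun z => Defs.RInt f y z) x (f x).
Proof.
  intros Hf Hy Hx. apply is_derive_Reals.
  apply (is_derive_RInt f (fun z => Defs.RInt f y z) y x).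
  - generalize (locally_of_Rabs x I (inI_open a b x Hx)). apply filter_imp. intros z Hz.
    destruct (RInt_eq_RInt f y z Hf Hy Hz) as [He ->]. apply (RInt_correct (V := R_CompleteNormedModule)); auto.
  - apply continuity_pt_filterlim; apply Hf; auto.
Qed.

Lemma RInt_derive_lower f y x : contI f -> I y -> I x ->
  derivable_pt_lim (fun z => Defs.RInt f z y) x (- f x).
Proof.
  intros Hf Hy Hx. apply is_derive_Reals.
  apply (is_derive_RInt' f (fun z => Defs.RInt f z y) x y).
  - generalize (locally_of_Rabs x I (inI_open a b x Hx)). apply filter_imp. intros z Hz.
    destruct (RInt_eq_RInt f z y Hf Hz Hy) as [He ->]. apply (RInt_correct (V := R_CompleteNormedModule)); auto.
  - apply continuity_pt_filterlim; apply Hf; auto.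
Qed.

Lemma RInt_Chasles_I f y z w : contI f -> I y -> I z -> I w ->
  Defs.RInt f y z + Defs.RInt f z w = Defs.RInt f y w.
Proof.
  intros Hf Hy Hz Hw.
  destruct (RInt_eq_RInt f y z Hf Hy Hz) as [H1 ->]. destruct (RInt_eq_RInt f z w Hf Hz Hw) as [H2 ->].
  destruct (RInt_eq_RInt f y w Hf Hy Hw) as [H3 ->].
  exact (RInt_Chasles (V := R_CompleteNormedModule) f y z w H1 H2).
Qed.

Lemma RInt_point_I f y : contI f -> I y -> Defs.RInt f y y = 0.
Proof. intros Hf Hy. destruct (RInt_eq_RInt f y y Hf Hy Hy) as [_ ->]. apply (RInt_point (V := R_CompleteNormedModule)). Qed.

Lemma RInt_swap_I f y z : contI f -> I y -> I z -> Defs.RInt f y z = - Defs.RInt f z y.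
Proof.
  intros Hf Hy Hz. pose proof (RInt_Chasles_I f y z y Hf Hy Hz Hy). rewrite RInt_point_I in H by auto. lra.
Qed.

Lemma RInt_le_upper f y z w : contI f -> (forall x, I x -> 0 <= f x) -> I y -> I z -> I w -> z <= w ->
  Defs.RInt f y z <= Defs.RInt f y w.
Proof.
  intros Hf Hp Hy Hz Hw Hzw.
  apply (le_of_derive_nonneg (fun t => Defs.RInt f y t) f z w); auto.
  - intros; apply RInt_derive_upper; auto.
  - intros c Hc; apply Hp. apply (inI_between a b z c w); auto; lra.
Qed.

Lemma RInt_nonneg_I f y z : contI f -> (forall x, I x -> 0 <= f x) -> I y -> I z -> y <= z ->
  0 <= Defs.RInt f y z.
Proof. intros. rewrite <- (RInt_point_I f y) by auto. apply RInt_le_upper; auto; lra. Qed.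

Lemma bounded_of_near_ends F B1 B2 : contI F -> near_a a b (fun x => Rabs (F x) <= B1) ->
  near_b a b (fun x => Rabs (F x) <= B2) -> exists B, forall x, I x -> Rabs (F x) <= B.
Proof.
  intros Hc [y1 [Hy1 H1]] [z1 [Hz1 H2]].
  set (hi := Rmax y1 z1).
  assert (Hhi : I hi) by (unfold hi, Rmax; destruct Rle_dec; auto).
  destruct (continuity_ab_maj (fun x => Rabs (F x)) y1 hi) as [Mx [HM HMx]].
  - unfold hi; apply Rmax_l.
  - intros c Hc'. apply (continuity_pt_comp F Rabs); [|apply Rcontinuity_abs].
    apply Hc. apply (inI_between a b y1 c hi); auto; apply Hc'.
  - exists (Rmax (Rmax B1 B2) (Rabs (F Mx))). intros x Hx.
    pose proof (Rmax_l (Rmax B1 B2) (Rabs (F Mx))). pose proof (Rmax_r (Rmax B1 B2) (Rabs (F Mx))).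
    pose proof (Rmax_l B1 B2). pose proof (Rmax_r B1 B2).
    destruct (Rlt_le_dec x y1) as [Hl|Hl]; [specialize (H1 x Hx Hl); lra|].
    destruct (Rlt_le_dec z1 x) as [Hr|Hr]; [specialize (H2 x Hx Hr); lra|].
    assert (Hxh : x <= hi) by (unfold hi; pose proof (Rmax_r y1 z1); lra).
    specialize (HM x (conj Hl Hxh)). simpl in HM. lra.
Qed.

End CalculusOnI.

Lemma derivable_pt_lim_piecewise f D p q r dp dq dr t :
  (forall z, Rabs z <= 1 -> f z = p z) -> (forall z, 1 <= z -> f z = q z) ->
  (forall z, z <= -1 -> f z = r z) ->
  (forall z, derivable_pt_lim p z (dp z)) -> (forall z, derivable_pt_lim q z (dq z)) ->
  (forall z, derivable_pt_lim r z (dr z)) ->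
  (forall z, Rabs z <= 1 -> D z = dp z) -> (forall z, 1 <= z -> D z = dq z) ->
  (forall z, z <= -1 -> D z = dr z) ->
  derivable_pt_lim f t (D t).
Proof.
  intros Fp Fq Fr Hp Hq Hr Dp Dq Dr.
  destruct (Rlt_le_dec 1 t) as [Ht|Ht]; [|destruct (Rlt_le_dec t (-1)) as [Ht'|Ht']].
  - rewrite Dq by lra. apply (derivable_pt_lim_loc f q); auto.
    exists (t - 1); split; [lra|]. intros z Hz; apply Rabs_def2 in Hz. apply Fq; lra.
  - rewrite Dr by lra. apply (derivable_pt_lim_loc f r); auto.
    exists (- 1 - t); split; [lra|]. intros z Hz; apply Rabs_def2 in Hz. apply Fr; lra.
  - destruct (Req_dec t 1) as [->|H1]; [|destruct (Req_dec t (-1)) as [->|H2]].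
    + apply (derivable_pt_lim_glue f q p 1 _ 1); try lra.
      * intros z Hz; apply Fq; lra.
      * intros z Hz; apply Fp, Rabs_le; lra.
      * rewrite Dq by lra; auto.
      * rewrite Dp by (rewrite Rabs_R1; lra); auto.
    + apply (derivable_pt_lim_glue f p r (-1) _ 1); try lra.
      * intros z Hz; apply Fp, Rabs_le; lra.
      * intros z Hz; apply Fr; lra.
      * rewrite Dp by (apply Rabs_le; lra); auto.
      * rewrite Dr by lra; auto.
    + rewrite Dp by (apply Rabs_le; lra). apply (derivable_pt_lim_loc f p); auto.
      exists (Rmin (1 - t) (t + 1)); split; [apply Rmin_glb_lt; lra|].
      intros z Hz; apply Rabs_def2 in Hz. pose proof (Rmin_l (1 - t) (t + 1)).
      pose proof (Rmin_r (1 - t) (t + 1)). apply Fp, Rabs_le; lra.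
Qed.

Lemma continuity_pt_piecewise f p q r t :
  (forall z, Rabs z <= 1 -> f z = p z) -> (forall z, 1 <= z -> f z = q z) ->
  (forall z, z <= -1 -> f z = r z) ->
  (forall z, continuity_pt p z) -> (forall z, continuity_pt q z) -> (forall z, continuity_pt r z) ->
  continuity_pt f t.
Proof.
  intros Fp Fq Fr Hp Hq Hr.
  destruct (Rlt_le_dec 1 t) as [Ht|Ht]; [|destruct (Rlt_le_dec t (-1)) as [Ht'|Ht']].
  - apply (continuity_pt_loc f q); auto.
    exists (t - 1); split; [lra|]. intros z Hz; apply Rabs_def2 in Hz. apply Fq; lra.
  - apply (continuity_pt_loc f r); auto.
    exists (- 1 - t); split; [lra|]. intros z Hz; apply Rabs_def2 in Hz. apply Fr; lra.
  - destruct (Req_dec t 1) as [->|H1]; [|destruct (Req_dec t (-1)) as [->|H2]].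
    + apply (continuity_pt_glue f q p 1 1); auto; try lra.
      * intros z Hz; apply Fq; lra.
      * intros z Hz; apply Fp, Rabs_le; lra.
    + apply (continuity_pt_glue f p r (-1) 1); auto; try lra.
      * intros z Hz; apply Fp, Rabs_le; lra.
      * intros z Hz; apply Fr; lra.
    + apply (continuity_pt_loc f p); auto.
      exists (Rmin (1 - t) (t + 1)); split; [apply Rmin_glb_lt; lra|].
      intros z Hz; apply Rabs_def2 in Hz. pose proof (Rmin_l (1 - t) (t + 1)).
      pose proof (Rmin_r (1 - t) (t + 1)). apply Fp, Rabs_le; lra.
Qed.

Definition dh (t : R) : R :=
  if Rle_dec (Rabs t) 1 then - / 2 * t ^ 3 + 3 / 2 * t else if Rle_dec 0 t then 1 else -1.
Definition d2h (t : R) : R :=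
  if Rle_dec (Rabs t) 1 then - 3 / 2 * t ^ 2 + 3 / 2 else 0.

Lemma hfun_inside t : Rabs t <= 1 -> hfun t = - / 8 * t ^ 4 + 3 / 4 * t ^ 2 + 3 / 8.
Proof. intros; unfold hfun; destruct Rle_dec; [reflexivity|contradiction]. Qed.
Lemma hfun_outside t : ~ Rabs t <= 1 -> hfun t = Rabs t.
Proof. intros; unfold hfun; destruct Rle_dec; [contradiction|reflexivity]. Qed.

Lemma dh_inside t : Rabs t <= 1 -> dh t = - / 2 * t ^ 3 + 3 / 2 * t.
Proof. intros; unfold dh; destruct Rle_dec; [reflexivity|contradiction]. Qed.
Lemma d2h_inside t : Rabs t <= 1 -> d2h t = - 3 / 2 * t ^ 2 + 3 / 2.
Proof. intros; unfold d2h; destruct Rle_dec; [reflexivity|contradiction]. Qed.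

Lemma hfun_derive t : derivable_pt_lim hfun t (dh t).
Proof.
  apply (derivable_pt_lim_piecewise hfun dh (fun z => - / 8 * z ^ 4 + 3 / 4 * z ^ 2 + 3 / 8)
    (fun z => z) (fun z => - z) (fun z => - / 2 * z ^ 3 + 3 / 2 * z) (fun _ => 1) (fun _ => -1)).
  - apply hfun_inside.
  - intros z Hz. destruct (Req_dec z 1) as [->|]; [rewrite hfun_inside; [field|rewrite Rabs_R1; lra]|].
    rewrite hfun_outside; [apply Rabs_right|rewrite Rabs_right]; lra.
  - intros z Hz. destruct (Req_dec z (-1)) as [->|]; [rewrite hfun_inside; [field|apply Rabs_le; lra]|].
    rewrite hfun_outside; [apply Rabs_left|rewrite Rabs_left]; lra.
  - intros z; apply is_derive_Reals; auto_derive; auto; field.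
  - intros z; apply derivable_pt_lim_id.
  - intros z; apply is_derive_Reals; auto_derive; auto; ring.
  - apply dh_inside.
  - intros z Hz; unfold dh. destruct Rle_dec as [H|H].
    + rewrite Rabs_right in H by lra. replace z with 1 by lra. field.
    + destruct Rle_dec; lra.
  - intros z Hz; unfold dh. destruct Rle_dec as [H|H].
    + rewrite Rabs_left in H by lra. replace z with (-1) by lra. field.
    + destruct Rle_dec; lra.
Qed.

Lemma dh_derive t : derivable_pt_lim dh t (d2h t).
Proof.
  apply (derivable_pt_lim_piecewise dh d2h (fun z => - / 2 * z ^ 3 + 3 / 2 * z)
    (fun _ => 1) (fun _ => -1) (fun z => - 3 / 2 * z ^ 2 + 3 / 2) (fun _ => 0) (fun _ => 0)).
  - apply dh_inside.
  - intros z Hz; unfold dh. destruct Rle_dec as [H|H].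
    + rewrite Rabs_right in H by lra. replace z with 1 by lra. field.
    + destruct Rle_dec; lra.
  - intros z Hz; unfold dh. destruct Rle_dec as [H|H].
    + rewrite Rabs_left in H by lra. replace z with (-1) by lra. field.
    + destruct Rle_dec; lra.
  - intros z; apply is_derive_Reals; auto_derive; auto; field.
  - intros z; apply derivable_pt_lim_const.
  - intros z; apply derivable_pt_lim_const.
  - apply d2h_inside.
  - intros z Hz; unfold d2h. destruct Rle_dec as [H|H]; [|reflexivity].
    rewrite Rabs_right in H by lra. replace z with 1 by lra. field.
  - intros z Hz; unfold d2h. destruct Rle_dec as [H|H]; [|reflexivity].
    rewrite Rabs_left in H by lra. replace z with (-1) by lra. field.
Qed.

Lemma d2h_cont t : continuity_pt d2h t.
Proof.
  assert (H0 : forall z, ~ Rabs z <= 1 -> d2h z = 0).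
  { intros z Hz; unfold d2h; destruct Rle_dec; [contradiction|reflexivity]. }
  apply (continuity_pt_piecewise d2h (fun z => - 3 / 2 * z ^ 2 + 3 / 2) (fun _ => 0) (fun _ => 0)).
  - apply d2h_inside.
  - intros z Hz. destruct (Req_dec z 1) as [->|]; [rewrite d2h_inside; [field|rewrite Rabs_R1; lra]|].
    apply H0; rewrite Rabs_right; lra.
  - intros z Hz. destruct (Req_dec z (-1)) as [->|]; [rewrite d2h_inside; [field|apply Rabs_le; lra]|].
    apply H0; rewrite Rabs_left; lra.
  - intros z. apply derivable_continuous_pt. exists (- 3 * z).
    apply is_derive_Reals; auto_derive; auto; field.
  - intros z; apply continuity_pt_const; intros ? ?; auto.
  - intros z; apply continuity_pt_const; intros ? ?; auto.
Qed.

Lemma Derive_hfun t : Derive hfun t = dh t.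
Proof. apply is_derive_unique, is_derive_Reals, hfun_derive. Qed.
Lemma Derive_dh t : Derive dh t = d2h t.
Proof. apply is_derive_unique, is_derive_Reals, dh_derive. Qed.

Lemma hfun_ge_abs t : Rabs t <= hfun t.
Proof.
  unfold hfun; destruct Rle_dec as [H|H]; [|lra].
  replace (t ^ 4) with ((t ^ 2) ^ 2) by ring. rewrite <- (pow2_abs t).
  pose proof (Rabs_pos t).
  assert (0 <= (1 - Rabs t) ^ 3 * (3 + Rabs t)) by (apply Rmult_le_pos; [apply pow_le|]; lra).
  enough (- / 8 * (Rabs t ^ 2) ^ 2 + 3 / 4 * Rabs t ^ 2 + 3 / 8 = Rabs t + (1 - Rabs t) ^ 3 * (3 + Rabs t) / 8)
    by lra.
  field.
Qed.

Lemma hfun_nonneg t : 0 <= hfun t.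
Proof. pose proof (hfun_ge_abs t); pose proof (Rabs_pos t); lra. Qed.

Lemma hfun_le_1 t : Rabs t <= 1 -> hfun t <= 1.
Proof.
  intros H; rewrite hfun_inside by auto.
  replace (t ^ 4) with ((t ^ 2) ^ 2) by ring.
  assert (0 <= t ^ 2 <= 1) by (rewrite <- pow2_abs; split; [apply pow_le, Rabs_pos|pose proof (Rabs_pos t); simpl; nra]).
  nra.
Qed.

Lemma hfun_opp t : hfun (- t) = hfun t.
Proof. unfold hfun. rewrite Rabs_Ropp. destruct Rle_dec; [ring|reflexivity]. Qed.

Lemma dh_bound t : Rabs (dh t) <= 1.
Proof.
  unfold dh; destruct Rle_dec as [H|H].
  - apply Rabs_le_between in H as [? ?]. apply Rabs_le.
    assert (0 <= (t - 1) ^ 2 * (t + 2)) by (apply Rmult_le_pos; [apply pow2_ge_0|lra]).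
    assert (0 <= (t + 1) ^ 2 * (2 - t)) by (apply Rmult_le_pos; [apply pow2_ge_0|lra]).
    split; nra.
  - destruct Rle_dec; apply Rabs_le; lra.
Qed.

Lemma d2h_bound t : Rabs (d2h t) <= 3 / 2.
Proof.
  unfold d2h; destruct Rle_dec as [H|H].
  - apply Rabs_le_between in H as [? ?]. apply Rabs_le. assert (t ^ 2 <= 1) by nra. split; nra.
  - rewrite Rabs_R0; lra.
Qed.

Lemma hfun_outside_unit t : 1 < Rabs t -> hfun t = Rabs t /\ t * dh t = Rabs t /\ d2h t = 0 /\ Rabs (dh t) = 1.
Proof.
  intros H. rewrite hfun_outside by lra. unfold dh, d2h. destruct Rle_dec; [lra|].
  destruct Rle_dec; [rewrite (Rabs_right t) by lra | rewrite (Rabs_left t) by lra];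
  repeat split; try ring; unfold Rabs; destruct Rcase_abs; lra.
Qed.

Lemma Rabs_div_pow_le N D c n : 1 <= D -> Rabs N <= c -> Rabs (N / D ^ n) <= c.
Proof.
  intros HD HN. assert (1 <= D ^ n) by (rewrite <- (pow1 n); apply pow_incr; lra).
  rewrite Rabs_div, (Rabs_right (D ^ n)) by lra.
  apply Rmult_le_reg_r with (D ^ n); [lra|]. unfold Rdiv; rewrite Rmult_assoc, Rinv_l by lra.
  pose proof (Rabs_pos N). nra.
Qed.

Section Phi.
Variable k : R.
Hypothesis Hk : 0 < k <= 1.

Definition Phi_den t := 1 + k * hfun t.
Definition Phi t := t / Phi_den t.
Definition dPhi t := (Phi_den t - t * k * dh t) / Phi_den t ^ 2.
Definition d2Phi t := (- t * k * d2h t * Phi_den t - 2 * (Phi_den t - t * k * dh t) * (k * dh t)) / Phi_den t ^ 3.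

Lemma Phi_den_ge_1 t : 1 <= Phi_den t.
Proof. unfold Phi_den; pose proof (hfun_nonneg t); nra. Qed.

Lemma Phi_den_ge t : k * (1 + Rabs t) <= Phi_den t.
Proof. unfold Phi_den; pose proof (hfun_ge_abs t); nra. Qed.

Lemma Phi_derive t : derivable_pt_lim Phi t (dPhi t).
Proof.
  pose proof (Phi_den_ge_1 t). apply is_derive_Reals. unfold Phi, dPhi, Phi_den in *.
  auto_derive.
  - split; [exists (dh t); apply is_derive_Reals, hfun_derive|split; [lra|auto]].
  - rewrite Derive_hfun. field. lra.
Qed.

Lemma dPhi_derive t : derivable_pt_lim dPhi t (d2Phi t).
Proof.
  pose proof (Phi_den_ge_1 t). apply is_derive_Reals. unfold dPhi, d2Phi, Phi_den in *.
  assert (ex_derive hfun t) by (exists (dh t); apply is_derive_Reals, hfun_derive).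
  assert (ex_derive dh t) by (exists (d2h t); apply is_derive_Reals, dh_derive).
  auto_derive.
  - repeat split; auto; apply Rgt_not_eq; nra.
  - rewrite Derive_hfun, Derive_dh. field. lra.
Qed.

Lemma Phi_cont t : continuity_pt Phi t.
Proof. apply derivable_continuous_pt. exists (dPhi t). apply Phi_derive. Qed.
Lemma dPhi_cont t : continuity_pt dPhi t.
Proof. apply derivable_continuous_pt. exists (d2Phi t). apply dPhi_derive. Qed.
Lemma d2Phi_cont t : continuity_pt d2Phi t.
Proof.
  assert (Ch : continuity_pt hfun t) by (apply derivable_continuous_pt; exists (dh t); apply hfun_derive).
  assert (Ch1 : continuity_pt dh t) by (apply derivable_continuous_pt; exists (d2h t); apply dh_derive).
  pose proof (d2h_cont t). pose proof (Phi_den_ge_1 t).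
  assert (CD : continuity_pt Phi_den t).
  { apply (continuity_pt_plus (fct_cte 1) (fun t => k * hfun t)); [apply continuity_pt_const; intros ? ?; auto|].
    apply (continuity_pt_scal hfun k t Ch). }
  unfold d2Phi.
  apply (continuity_pt_div (fun t => - t * k * d2h t * Phi_den t - 2 * (Phi_den t - t * k * dh t) * (k * dh t))
    (fun t => Phi_den t ^ 3)).
  - repeat first [ apply (continuity_pt_minus (fun t => _) (fun t => _))
                 | apply (continuity_pt_mult (fun t => _) (fun t => _))
                 | apply (continuity_pt_opp (fun t => _))
                 | apply continuity_pt_id | assumption
                 | apply continuity_pt_const; intros ? ?; auto ].
  - apply (continuity_pt_pow Phi_den 3); auto.
  - apply pow_nonzero; lra.
Qed.

Lemma Phi_opp t : Phi (- t) = - Phi t.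
Proof. unfold Phi, Phi_den. rewrite hfun_opp. field. pose proof (hfun_nonneg t). nra. Qed.

Lemma Phi_bound t : Rabs (Phi t) <= / k.
Proof.
  unfold Phi. pose proof (Phi_den_ge_1 t). pose proof (Phi_den_ge t). pose proof (Rabs_pos t).
  rewrite Rabs_div, (Rabs_right (Phi_den t)) by lra.
  apply Rmult_le_reg_l with (k * Phi_den t); [nra|].
  replace (k * Phi_den t * (Rabs t / Phi_den t)) with (k * Rabs t) by (field; lra).
  replace (k * Phi_den t * / k) with (Phi_den t) by (field; lra). nra.
Qed.

Lemma Phi_near_inv t : 1 < t -> Rabs (Phi t - / k) <= / (k * k * t).
Proof.
  intros Ht. unfold Phi, Phi_den. assert (Hn : ~ Rabs t <= 1) by (rewrite Rabs_right by lra; lra).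
  rewrite (hfun_outside t Hn), (Rabs_right t) by lra.
  replace (t / (1 + k * t) - / k) with (- / (k * (1 + k * t))) by (field; split; nra).
  rewrite Rabs_Ropp, Rabs_right by (apply Rle_ge, Rlt_le, Rinv_0_lt_compat; nra).
  apply Rinv_le_contravar; nra.
Qed.

Lemma Phi_lim_inf eps : 0 < eps -> exists M, forall t, M < t -> Rabs (Phi t - / k) < eps.
Proof.
  intros He. exists (Rmax 1 (/ eps / (k * k))). intros t Ht.
  pose proof (Rmax_l 1 (/ eps / (k * k))). pose proof (Rmax_r 1 (/ eps / (k * k))).
  eapply Rle_lt_trans; [apply Phi_near_inv; lra|].
  assert (Hkk : 0 < k * k) by nra.
  apply Rmult_lt_reg_l with (k * k * t); [nra|].
  rewrite Rinv_r by nra.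
  assert (/ eps <= (k * k) * (/ eps / (k * k))) by (right; field; lra).
  apply Rmult_lt_reg_r with (/ eps); [apply Rinv_0_lt_compat; lra|].
  replace (k * k * t * eps * / eps) with (k * k * t) by (field; lra). nra.
Qed.

(* [9 * 8] bounds [|d2Phi t| (1 + |t|)^3] for [|t| <= 1], and [2 / k^2] bounds it for [|t| > 1]. *)
Definition KPhi := 72 + 2 / (k * k).

Lemma KPhi_pos : 0 < KPhi.
Proof. unfold KPhi. assert (0 < 2 / (k * k)) by (apply Rdiv_lt_0_compat; nra). lra. Qed.

Lemma Phi_num_inside t : Rabs t <= 1 -> Phi_den t <= 2 /\ Rabs (Phi_den t - t * k * dh t) <= 3.
Proof.
  intros Ht. pose proof (hfun_le_1 t Ht). pose proof (dh_bound t). pose proof (Phi_den_ge_1 t).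
  assert (Rabs (t * k * dh t) <= 1).
  { rewrite !Rabs_mult, (Rabs_right k) by lra. pose proof (Rabs_pos (dh t)). pose proof (Rabs_pos t).
    assert (Rabs t * k <= 1) by nra. nra. }
  assert (Phi_den t <= 2) by (unfold Phi_den; nra). split; [lra|].
  pose proof (Rabs_triang (Phi_den t) (- (t * k * dh t))) as T.
  rewrite Rabs_Ropp, (Rabs_right (Phi_den t)) in T by lra. unfold Rminus. lra.
Qed.

Lemma Phi_num_outside t : 1 < Rabs t -> Phi_den t - t * k * dh t = 1.
Proof.
  intros Ht. destruct (hfun_outside_unit t Ht) as [E1 [E2 _]].
  unfold Phi_den. rewrite E1. replace (t * k * dh t) with (k * (t * dh t)) by ring. rewrite E2. ring.
Qed.

Lemma Phi_den_ratio t : 0 <= (1 + Rabs t) / Phi_den t <= / k.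
Proof.
  pose proof (Phi_den_ge_1 t). pose proof (Phi_den_ge t). pose proof (Rabs_pos t).
  split; [apply Rdiv_le_0_compat; lra|].
  apply Rmult_le_reg_l with (k * Phi_den t); [nra|].
  replace (k * Phi_den t * ((1 + Rabs t) / Phi_den t)) with (k * (1 + Rabs t)) by (field; lra).
  replace (k * Phi_den t * / k) with (Phi_den t) by (field; lra). lra.
Qed.

Lemma dPhi_decay t : Rabs (dPhi t) <= KPhi / (1 + Rabs t) ^ 2.
Proof.
  pose proof (Rabs_pos t). pose proof (Phi_den_ge_1 t). pose proof KPhi_pos.
  assert (HX : 0 < (1 + Rabs t) ^ 2) by (apply pow_lt; lra).
  apply Rmult_le_reg_r with ((1 + Rabs t) ^ 2); [lra|].
  unfold Rdiv; rewrite Rmult_assoc, Rinv_l, Rmult_1_r by lra. unfold dPhi.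
  destruct (Rle_dec (Rabs t) 1) as [Hin|Hout].
  - destruct (Phi_num_inside t Hin) as [_ HN].
    pose proof (Rabs_div_pow_le _ _ _ 2 (Phi_den_ge_1 t) HN).
    assert ((1 + Rabs t) ^ 2 <= 4) by (simpl; nra).
    apply Rle_trans with (3 * 4); [apply Rmult_le_compat; auto; try apply Rabs_pos; lra|].
    unfold KPhi. assert (0 < 2 / (k * k)) by (apply Rdiv_lt_0_compat; nra). lra.
  - rewrite Phi_num_outside by lra. destruct (Phi_den_ratio t) as [R0 R1].
    assert (0 < Phi_den t ^ 2) by (apply pow_lt; lra).
    rewrite Rabs_div, Rabs_R1, (Rabs_right (Phi_den t ^ 2)) by lra.
    replace (1 / Phi_den t ^ 2 * (1 + Rabs t) ^ 2) with (((1 + Rabs t) / Phi_den t) ^ 2) by (field; lra).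
    apply Rle_trans with ((/ k) ^ 2); [apply pow_incr; lra|].
    replace ((/ k) ^ 2) with (1 / (k * k)) by (field; lra).
    unfold KPhi. assert (1 / (k * k) <= 2 / (k * k)) by (apply Rmult_le_compat_r; [apply Rlt_le, Rinv_0_lt_compat; nra|lra]).
    lra.
Qed.

Lemma d2Phi_decay t : Rabs (d2Phi t) <= KPhi / (1 + Rabs t) ^ 3.
Proof.
  pose proof (Rabs_pos t). pose proof (Phi_den_ge_1 t). pose proof KPhi_pos.
  assert (HX : 0 < (1 + Rabs t) ^ 3) by (apply pow_lt; lra).
  apply Rmult_le_reg_r with ((1 + Rabs t) ^ 3); [lra|].
  unfold Rdiv; rewrite Rmult_assoc, Rinv_l, Rmult_1_r by lra. unfold d2Phi.
  destruct (Rle_dec (Rabs t) 1) as [Hin|Hout].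
  - destruct (Phi_num_inside t Hin) as [HD HN]. pose proof (dh_bound t). pose proof (d2h_bound t).
    assert (Rabs (- t * k * d2h t * Phi_den t - 2 * (Phi_den t - t * k * dh t) * (k * dh t)) <= 9).
    { eapply Rle_trans; [apply Rabs_triang|]. rewrite Rabs_Ropp, !Rabs_mult, Rabs_Ropp.
      rewrite (Rabs_right k), (Rabs_right (Phi_den t)), (Rabs_right 2) by lra.
      pose proof (Rabs_pos (dh t)). pose proof (Rabs_pos (d2h t)).
      pose proof (Rabs_pos (Phi_den t - t * k * dh t)).
      assert (Rabs t * k <= 1) by nra. assert (Rabs (d2h t) * Phi_den t <= 3) by nra.
      assert (Rabs t * k * Rabs (d2h t) * Phi_den t <= 3).
      { replace (Rabs t * k * Rabs (d2h t) * Phi_den t) with ((Rabs t * k) * (Rabs (d2h t) * Phi_den t)) by ring.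
        assert (0 <= Rabs t * k) by nra. assert (0 <= Rabs (d2h t) * Phi_den t) by nra. nra. }
      assert (2 * Rabs (Phi_den t - t * k * dh t) * (k * Rabs (dh t)) <= 6) by (assert (k * Rabs (dh t) <= 1) by nra; nra).
      lra. }
    pose proof (Rabs_div_pow_le _ _ _ 3 (Phi_den_ge_1 t) H4).
    assert ((1 + Rabs t) ^ 3 <= 8) by (replace 8 with (2 ^ 3) by ring; apply pow_incr; lra).
    apply Rle_trans with (9 * 8); [apply Rmult_le_compat; auto; try apply Rabs_pos; lra|].
    unfold KPhi. assert (0 < 2 / (k * k)) by (apply Rdiv_lt_0_compat; nra). lra.
  - destruct (hfun_outside_unit t) as [_ [_ [E3 E4]]]; [lra|].
    rewrite Phi_num_outside, E3 by lra. destruct (Phi_den_ratio t) as [R0 R1].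
    replace (- t * k * 0 * Phi_den t - 2 * 1 * (k * dh t)) with (- (2 * k * dh t)) by ring.
    assert (0 < Phi_den t ^ 3) by (apply pow_lt; lra).
    rewrite Rabs_div, Rabs_Ropp, !Rabs_mult, E4, (Rabs_right 2), (Rabs_right k),
      (Rabs_right (Phi_den t ^ 3)) by lra.
    replace (2 * k * 1 / Phi_den t ^ 3 * (1 + Rabs t) ^ 3) with (2 * k * ((1 + Rabs t) / Phi_den t) ^ 3)
      by (field; lra).
    apply Rle_trans with (2 * k * (/ k) ^ 3); [apply Rmult_le_compat_l; [lra|apply pow_incr; lra]|].
    replace (2 * k * (/ k) ^ 3) with (2 / (k * k)) by (field; lra).
    unfold KPhi; lra.
Qed.

End Phi.

(* Junk value 0 when the improper integral diverges; every use below assumes [isfin (IntB a b f x0)]. *)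
Definition tail (a b : ereal) (f : R -> R) (y : R) : R := real_of (IntB a b f y).

Section TailIntegrals.
Context {a b : ereal} {x0 : R} (Hx0 : inI a b x0).
Local Notation I := (inI a b).
Local Notation RI := Defs.RInt.
Variable f : R -> R.
Hypotheses (Hf : contI a b f) (Hf0 : forall x, I x -> 0 <= f x).

Lemma IntB_is_lim y : I y -> lim_b a b (RI f y) (IntB a b f y).
Proof.
  intros Hy. destruct (lim_b_nondecreasing (RI f y) y Hy) as [l [Hl _]].
  - intros; apply (RInt_le_upper a b); auto.
  - replace (IntB a b f y) with l; [exact Hl|]. symmetry. apply (limval_b_eq Hx0). exact Hl.
Qed.

Hypothesis Hfin : isfin (IntB a b f x0).

Lemma tail_spec y : I y -> lim_b a b (RI f y) (Fin (tail a b f y)) /\ tail a b f y = tail a b f x0 + RI f y x0.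
Proof.
  intros Hy. destruct Hfin as [r Hr].
  pose proof (IntB_is_lim x0 Hx0) as H0. rewrite Hr in H0.
  assert (H1 : lim_b a b (RI f y) (Fin (RI f y x0 + r))).
  { apply lim_b_ext with (fun z => RI f y x0 + RI f x0 z).
    - intros z Hz. apply (RInt_Chasles_I a b); auto.
    - apply (lim_b_plus Hx0); auto. apply (lim_b_const Hx0). }
  assert (E : IntB a b f y = Fin (RI f y x0 + r)) by (apply (limval_b_eq Hx0); exact H1).
  unfold tail. rewrite Hr, E. simpl. split; [exact H1|ring].
Qed.

Lemma tail_derive x : I x -> derivable_pt_lim (tail a b f) x (- f x).
Proof.
  intros Hx. apply derivable_pt_lim_loc with (fun y => tail a b f x0 + RI f y x0).
  - destruct (inI_open a b x Hx) as [d [Hd Ho]]. exists d; split; auto.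
    intros z Hz. apply (tail_spec z (Ho z Hz)).
  - apply (derivable_pt_lim_eq_val _ _ (0 + - f x)); [ring|].
    apply (derivable_pt_lim_plus (fun _ => tail a b f x0) (fun y => RI f y x0)).
    + apply derivable_pt_lim_const.
    + apply (RInt_derive_lower a b); auto.
Qed.

Lemma tail_cont : contI a b (tail a b f).
Proof. apply (contI_of_derivable a b _ (fun x => - f x)). apply tail_derive. Qed.

Lemma tail_lim_b : lim_b a b (tail a b f) (Fin 0).
Proof.
  pose proof (proj1 (tail_spec x0 Hx0)) as Hlim.
  apply lim_b_ext with (fun y => tail a b f x0 + - RI f x0 y).
  - intros y Hy. rewrite (proj2 (tail_spec y Hy)), (RInt_swap_I a b f y x0); auto.
  - replace 0 with (tail a b f x0 + - tail a b f x0) by ring. apply (lim_b_plus Hx0); [apply (lim_b_const Hx0)|].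
    apply (lim_b_comp Hx0 _ Ropp); [exact Hlim|apply continuity_pt_opp, continuity_pt_id].
Qed.

Lemma tail_nonneg y : I y -> 0 <= tail a b f y.
Proof.
  intros Hy. apply (lim_b_ge Hx0 (RI f y)); [|apply tail_spec; auto].
  exists y; split; auto. intros z Hz Hyz. apply (RInt_nonneg_I a b); auto; lra.
Qed.

End TailIntegrals.

Lemma RInt_lower_bounded_of_IntA {a b : ereal} {x0 : R} (Hx0 : inI a b x0) f : contI a b f ->
  (forall u, inI a b u -> u < x0 -> 0 <= f u) -> isfin (IntA a b f x0) ->
  exists B, forall y, inI a b y -> y < x0 -> Defs.RInt f y x0 <= B.
Proof.
  intros Hf Hp [r Hr].
  assert (Hm : forall x y, inI a b x -> inI a b y -> x <= y -> y < x0 -> Defs.RInt f y x0 <= Defs.RInt f x x0).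
  { intros x y Hx Hy Hxy Hyx. enough (- Defs.RInt f x x0 <= - Defs.RInt f y x0) by lra.
    apply (le_of_derive_nonneg a b (fun t => - Defs.RInt f t x0) f); auto.
    - intros z Hz. apply (derivable_pt_lim_eq_val _ _ (- - f z)); [ring|].
      apply derivable_pt_lim_opp, (RInt_derive_lower a b); auto.
    - intros c Hc; apply Hp; [apply (inI_between a b x c y)|]; auto; lra. }
  destruct (lim_a_nonincreasing (fun y => Defs.RInt f y x0) x0 Hx0 Hm) as [l [Hl _]].
  assert (l = Fin r) by (rewrite <- Hr; symmetry; apply (limval_a_eq Hx0); exact Hl).
  subst l. exists r. apply (le_lim_a_of_nonincreasing Hx0 _ x0 r Hx0 Hm Hl).
Qed.

Lemma le_mul_of_div_le u v L : 0 < v -> u / v <= L -> u <= Rabs L * v.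
Proof.
  intros Hv H. apply Rmult_le_compat_r with (r := v) in H; [|lra].
  unfold Rdiv in H. rewrite Rmult_assoc, Rinv_l in H by lra. pose proof (Rle_abs L). nra.
Qed.

Lemma Rpower_pos W p : 0 < W -> 0 < Rpower W p.
Proof. intros; apply exp_pos. Qed.

Lemma Rpower_le_pow3 W e : 1 <= W -> 0 < e < 1 -> Rpower W (2 + e) <= W ^ 3.
Proof. intros HW He. rewrite <- (Rpower_pow 3 W) by lra. apply Rle_Rpower; auto. simpl; lra. Qed.

Lemma Rpower_split W e : 0 < W -> Rpower W (2 + e) = W ^ 3 * Rpower W (e - 1).
Proof.
  intros HW. replace (2 + e) with (INR 3 + (e - 1)) by (simpl; ring).
  rewrite Rpower_plus, Rpower_pow by lra. reflexivity.
Qed.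

Lemma growth_of_Rpower_bound S c W e L C : 1 <= W -> 0 < e < 1 -> 0 <= C -> c <= C ->
  S / Rpower W (2 + e) <= L -> S <= (Rabs L + C) * W ^ 3 /\ c <= (Rabs L + C) * W ^ 2.
Proof.
  intros HW He HC Hc HS. pose proof (Rpower_le_pow3 W e HW He). pose proof (Rpower_pos W (2 + e) ltac:(lra)).
  apply le_mul_of_div_le in HS; auto. pose proof (Rabs_pos L).
  assert (1 <= W ^ 2) by (rewrite <- (pow1 2); apply pow_incr; lra).
  assert (W ^ 2 <= W ^ 3) by (simpl; nra).
  split; nra.
Qed.

Lemma growth_of_bound_a S c W L : 1 <= W -> 0 <= S -> 0 <= c ->
  c / W ^ 2 + S / W ^ 3 <= L -> S <= Rabs L * W ^ 3 /\ c <= Rabs L * W ^ 2.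
Proof.
  intros HW HS Hc H. assert (0 < W ^ 2) by (apply pow_lt; lra). assert (0 < W ^ 3) by (apply pow_lt; lra).
  assert (0 <= S / W ^ 3) by (apply Rdiv_le_0_compat; lra).
  assert (0 <= c / W ^ 2) by (apply Rdiv_le_0_compat; lra).
  split; apply le_mul_of_div_le; auto; lra.
Qed.

Lemma growth_of_bound_b S c W L : 1 <= W -> 0 <= S -> 0 <= c ->
  c / W ^ 2 + S / (W * (1 + c)) <= L -> S <= (Rabs L + L * L) * W ^ 3 /\ c <= (Rabs L + L * L) * W ^ 2.
Proof.
  intros HW HS Hc H. assert (0 < W ^ 2) by (apply pow_lt; lra).
  assert (0 <= S / (W * (1 + c))) by (apply Rdiv_le_0_compat; nra).
  assert (0 <= c / W ^ 2) by (apply Rdiv_le_0_compat; lra).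
  assert (Hc0 : c <= Rabs L * W ^ 2) by (apply le_mul_of_div_le; lra).
  assert (HS1 : S <= Rabs L * (W * (1 + c))) by (apply le_mul_of_div_le; [nra|lra]).
  pose proof (Rabs_pos L). assert (1 <= W ^ 2) by (rewrite <- (pow1 2); apply pow_incr; lra).
  assert (Rabs L * Rabs L = L * L) by (rewrite <- Rabs_mult; apply Rabs_right; nra).
  assert (W <= W ^ 3) by (simpl; nra).
  split; [|nra].
  apply Rle_trans with (Rabs L * (W * (1 + Rabs L * W ^ 2))); [|nra].
  apply Rle_trans with (Rabs L * (W * (1 + c))); auto. apply Rmult_le_compat_l; auto. nra.
Qed.

Lemma sq_mul_le_of_decay K L P W S : 1 <= W -> 0 <= K -> 0 <= L -> Rabs P <= K / W ^ 2 ->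
  0 <= S -> S <= L * W ^ 3 -> P ^ 2 * S <= K * K * L.
Proof.
  intros HW HK HL HP HS HSL.
  assert (HP2 : P ^ 2 <= (K / W ^ 2) ^ 2) by (rewrite <- (pow2_abs P); apply pow_incr; split; auto; apply Rabs_pos).
  apply Rle_trans with ((K / W ^ 2) ^ 2 * (L * W ^ 3)); [apply Rmult_le_compat; auto; apply pow2_ge_0|].
  replace ((K / W ^ 2) ^ 2 * (L * W ^ 3)) with (K * K * L * / W) by (field; lra).
  assert (/ W <= 1) by (rewrite <- Rinv_1; apply Rinv_le_contravar; lra).
  assert (0 <= K * K * L) by (apply Rmult_le_pos; [nra|auto]).
  assert (0 < / W) by (apply Rinv_0_lt_compat; lra). nra.
Qed.

Lemma half_mul_le_of_decay K L Q W S : 1 <= W -> 0 <= K -> Rabs Q <= K / W ^ 3 ->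
  0 <= S -> S <= L * W ^ 3 -> Rabs (/ 2 * Q * S) <= K * Rabs L.
Proof.
  intros HW HK HQ HS HSL. assert (0 < W ^ 3) by (apply pow_lt; lra). pose proof (Rle_abs L).
  rewrite !Rabs_mult, (Rabs_right (/ 2)), (Rabs_right S) by lra.
  apply Rle_trans with (/ 2 * (K / W ^ 3) * (Rabs L * W ^ 3)).
  - assert (S <= Rabs L * W ^ 3) by nra. pose proof (Rabs_pos Q).
    apply Rmult_le_compat; lra.
  - replace (/ 2 * (K / W ^ 3) * (Rabs L * W ^ 3)) with (/ 2 * (K * Rabs L)) by (field; lra).
    pose proof (Rabs_pos L). assert (0 <= K * Rabs L) by nra. lra.
Qed.

Lemma mul_sub_le_of_decay K L P W c F : 1 <= W -> 0 <= K -> Rabs P <= K / W ^ 2 ->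
  0 <= c -> c <= L * W ^ 2 -> Rabs (P * (F - c)) <= K * (Rabs F + L).
Proof.
  intros HW HK HP Hc HcL. assert (HW2 : 1 <= W ^ 2) by (rewrite <- (pow1 2); apply pow_incr; lra).
  rewrite Rabs_mult.
  assert (Rabs (F - c) <= Rabs F + L * W ^ 2).
  { unfold Rminus. eapply Rle_trans; [apply Rabs_triang|]. rewrite Rabs_Ropp, (Rabs_right c) by lra. lra. }
  apply Rle_trans with (K / W ^ 2 * (Rabs F + L * W ^ 2)); [apply Rmult_le_compat; auto; apply Rabs_pos|].
  replace (K / W ^ 2 * (Rabs F + L * W ^ 2)) with (K * Rabs F / W ^ 2 + K * L) by (field; lra).
  assert (K * Rabs F / W ^ 2 <= K * Rabs F).
  { unfold Rdiv. rewrite <- (Rmult_1_r (K * Rabs F)) at 2. apply Rmult_le_compat_l.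
    - pose proof (Rabs_pos F); nra.
    - rewrite <- Rinv_1. apply Rinv_le_contravar; lra. }
  lra.
Qed.

Lemma half_mul_le_of_decay_Rpower K L Q W S e : 1 <= W -> 0 <= K -> Rabs Q <= K / W ^ 3 ->
  0 <= S -> S <= L * Rpower W (2 + e) -> Rabs (/ 2 * Q * S) <= K * Rabs L * Rpower W (e - 1).
Proof.
  intros HW HK HQ HS HSL. rewrite Rpower_split in HSL by lra.
  pose proof (Rpower_pos W (e - 1) ltac:(lra)).
  replace (K * Rabs L * Rpower W (e - 1)) with (K * Rabs (L * Rpower W (e - 1)))
    by (rewrite Rabs_mult, (Rabs_right (Rpower W (e - 1))) by lra; ring).
  apply (half_mul_le_of_decay _ _ _ W); auto. lra.
Qed.

Lemma Rpower_neg_small p eps : p < 0 -> 0 < eps -> exists M, forall W, M < W -> 1 <= W -> Rpower W p < eps.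
Proof.
  intros Hp He. exists (exp (ln (eps / 2) / p)). intros W HW H1. unfold Rpower.
  assert (Hl : ln (eps / 2) / p < ln W).
  { rewrite <- (ln_exp (ln (eps / 2) / p)). apply ln_increasing; auto. apply exp_pos. }
  assert (p * ln W < ln (eps / 2)).
  { apply Rmult_lt_compat_l with (r := - p) in Hl; [|lra].
    replace (- p * (ln (eps / 2) / p)) with (- ln (eps / 2)) in Hl by (field; lra). lra. }
  apply exp_increasing in H. rewrite exp_ln in H by lra. lra.
Qed.

Section Endpoint.
Context {a b : ereal} {x0 : R} (Hx0 : inI a b x0).
Local Notation I := (inI a b).

Lemma valE_inI f x : I x -> valE a b f x = f x.
Proof. intros Hx. unfold valE. destruct excluded_middle_informative; [reflexivity|contradiction]. Qed.

Lemma valE_a f r : a = Fin r -> valE a b f r = real_of (limval_a a b f).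
Proof.
  intros Ea. unfold valE. destruct excluded_middle_informative as [Hi|_].
  - exfalso. destruct Hi as [H _]. rewrite Ea in H. simpl in H. lra.
  - destruct excluded_middle_informative; [reflexivity|contradiction].
Qed.

Variables (r : R) (F F' : R -> R) (v e : R).
Hypotheses (Ea : a = Fin r) (HF : forall x, I x -> derivable_pt_lim F x (F' x))
  (Hv : lim_a a b F (Fin v)).

Lemma increment_near_a_le eps y h : I y -> (forall x, I x -> x < y -> Rabs (F' x - e) < eps) ->
  0 < h -> r + h < y -> Rabs (F (r + h) - v - e * h) <= eps * h.
Proof.
  intros Hy HyE Hh Hhy.
  assert (Ir : forall t, r < t -> t <= r + h -> I t) by (intros; apply (inI_lower a b _ y); auto; [rewrite Ea; simpl|]; lra).
  apply Rle_plus_epsilon. intros th Hth.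
  set (C := 1 + Rabs e). assert (HC : 0 < C) by (unfold C; pose proof (Rabs_pos e); lra).
  destruct (Hv (th / C) ltac:(apply Rdiv_lt_0_compat; lra)) as [y' [Hy' Hy'G]].
  assert (Hry' : r < y') by (destruct Hy' as [H _]; rewrite Ea in H; exact H).
  set (eta := Rmin (th / C) (Rmin h (y' - r)) / 2).
  assert (Heta : 0 < eta /\ eta <= th / C /\ eta < h /\ r + eta < y').
  { unfold eta. pose proof (Rmin_l (th / C) (Rmin h (y' - r))). pose proof (Rmin_r (th / C) (Rmin h (y' - r))).
    pose proof (Rmin_l h (y' - r)). pose proof (Rmin_r h (y' - r)).
    assert (0 < th / C) by (apply Rdiv_lt_0_compat; lra).
    assert (0 < Rmin (th / C) (Rmin h (y' - r))) by (repeat apply Rmin_glb_lt; lra). lra. }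
  destruct Heta as [He1 [He2 [He3 He4]]].
  destruct (MVT_I a b F F' (r + eta) (r + h)) as [c [Hc Emvt]]; auto; try apply Ir; try lra.
  assert (Hc' : r < c <= r + h) by lra. specialize (HyE c (Ir c (proj1 Hc') (proj2 Hc')) ltac:(lra)).
  assert (He' : r < r + eta <= r + h) by lra. specialize (Hy'G (r + eta) (Ir _ (proj1 He') (proj2 He')) He4).
  assert (Rabs (F (r + h) - F (r + eta) - e * (h - eta)) <= eps * (h - eta)).
  { replace (F (r + h) - F (r + eta) - e * (h - eta)) with ((F' c - e) * (h - eta)) by (rewrite Emvt; ring).
    rewrite Rabs_mult, (Rabs_right (h - eta)) by lra. apply Rmult_le_compat_r; lra. }
  replace (F (r + h) - v - e * h) with
    ((F (r + h) - F (r + eta) - e * (h - eta)) + (F (r + eta) - v) + (- (e * eta))) by ring.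
  eapply Rle_trans; [apply Rabs_triang|]. eapply Rle_trans; [apply Rplus_le_compat_r, Rabs_triang|].
  rewrite Rabs_Ropp, Rabs_mult, (Rabs_right eta) by lra.
  assert (Rabs e * eta <= Rabs e * (th / C)) by (apply Rmult_le_compat_l; [apply Rabs_pos|lra]).
  assert (th / C + Rabs e * (th / C) = th) by (unfold C; field; pose proof (Rabs_pos e); lra).
  assert (0 <= eps * eta) by (pose proof (Rabs_pos (F' c - e)); nra).
  lra.
Qed.

Lemma rderiv_a_of_lim_derive : lim_a a b F' (Fin e) -> rderiv (inEbar a b) (valE a b F) r e.
Proof.
  intros He eps Heps.
  rewrite valE_a, (limval_a_eq Hx0 _ _ Hv) by auto. simpl.
  destruct (He (eps / 2) ltac:(lra)) as [y [Hy HyE]].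
  assert (Hry : r < y) by (destruct Hy as [H _]; rewrite Ea in H; exact H).
  exists (y - r). split; [lra|]. intros h Hh0 Hhd HE.
  assert (Hhp : 0 < h).
  { destruct HE as [[HE|HE] _]; rewrite Ea in HE; simpl in HE; [lra|injection HE; lra]. }
  apply Rabs_def2 in Hhd as [Hhd _].
  rewrite valE_inI by (apply (inI_lower a b _ y); auto; [rewrite Ea; simpl|]; lra).
  pose proof (increment_near_a_le (eps / 2) y h Hy HyE Hhp ltac:(lra)) as Key.
  replace ((F (r + h) - v) / h - e) with ((F (r + h) - v - e * h) / h) by (field; lra).
  rewrite Rabs_div, (Rabs_right h) by lra.
  apply Rle_lt_trans with (eps / 2 * h / h); [apply Rmult_le_compat_r; [apply Rlt_le, Rinv_0_lt_compat|]; lra|].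
  replace (eps / 2 * h / h) with (eps / 2) by (field; lra). lra.
Qed.

End Endpoint.

Section Diffusion.
Variables (a b : ereal) (mu sigma : R -> R) (x0 : R) (stickya : bool)
  (c0 : R -> R) (c1 : R -> R -> ereal) (Fs : R).
Hypothesis Hx0 : inI a b x0.
Hypothesis Hmu : forall x, inI a b x -> continuity_pt mu x.
Hypothesis Hsig : forall x, inI a b x -> continuity_pt sigma x.
Hypothesis Hsig0 : forall x, inI a b x -> sigma x <> 0.
Hypothesis HA : Condition_A a b mu sigma x0 stickya.
Hypothesis HB : Condition_B a b mu sigma x0 stickya c0 c1.
Hypothesis HFs : F0_inf a b mu sigma x0 c0 c1 (Fin Fs).
Hypothesis HC : Condition_C a b mu sigma x0 c0 c1.
Hypothesis HD : Condition_D a b mu sigma x0 stickya c0 Fs.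

Local Notation I := (inI a b).
Local Notation RI := Defs.RInt.
Local Notation T := (tail a b).
Local Notation sd := (sdens mu sigma x0).
Local Notation md := (mdens mu sigma x0).
Local Notation cm := (fun x => c0 x * md x).
Local Notation cm2 := (fun x => 2 * c0 x * md x).
Local Notation G0f := (G0 a b mu sigma x0 c0 Fs).
Local Notation g0f := (g0 a b mu sigma x0 c0).
Local Notation zf := (zeta a b mu sigma x0).
#[local] Instance near_a_Filter_I : Filter (near_a a b) := filter_filter (ProperFilter := near_a_filter Hx0).
#[local] Instance near_b_Filter_I : Filter (near_b a b) := filter_filter (ProperFilter := near_b_filter Hx0).

Definition qrate x := 2 * mu x / sigma x ^ 2.

Lemma sigma2_pos x : I x -> 0 < sigma x ^ 2.
Proof. intros Hx. apply pow2_gt_0, Hsig0, Hx. Qed.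

Lemma qrate_cont : contI a b qrate.
Proof.
  intros x Hx. unfold qrate. apply (continuity_pt_div (fun y => 2 * mu y) (fun y => sigma y ^ 2)).
  - apply (continuity_pt_scal mu 2 x (Hmu x Hx)).
  - apply continuity_pt_pow, Hsig, Hx.
  - apply Rgt_not_eq, sigma2_pos, Hx.
Qed.

Lemma sdens_pos x : 0 < sd x.
Proof. apply exp_pos. Qed.

Lemma sdens_derive x : I x -> derivable_pt_lim sd x (- qrate x * sd x).
Proof.
  intros Hx. unfold sdens. change (fun u => 2 * mu u / sigma u ^ 2) with qrate.
  apply (derivable_pt_lim_eq_val _ _ (exp (- RI qrate x0 x) * - qrate x)); [ring|].
  apply (derivable_pt_lim_comp (fun y => - RI qrate x0 y) exp).
  - apply (derivable_pt_lim_opp (fun y => RI qrate x0 y)), (RInt_derive_upper a b); auto. apply qrate_cont.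
  - apply derivable_pt_lim_exp.
Qed.

Lemma sdens_cont : contI a b sd.
Proof. apply (contI_of_derivable a b sd (fun x => - qrate x * sd x)), sdens_derive. Qed.

Lemma sdens_nonneg x : 0 <= sd x.
Proof. apply Rlt_le, sdens_pos. Qed.

Lemma mdens_pos x : I x -> 0 < md x.
Proof.
  intros Hx; unfold mdens. pose proof (sigma2_pos x Hx). pose proof (sdens_pos x).
  apply Rdiv_lt_0_compat; [lra|]. apply Rmult_lt_0_compat; auto.
Qed.

Lemma mdens_nonneg x : I x -> 0 <= md x.
Proof. intros; apply Rlt_le, mdens_pos; auto. Qed.

Lemma mdens_cont : contI a b md.
Proof.
  intros x Hx; unfold mdens. pose proof (sigma2_pos x Hx). pose proof (sdens_pos x).
  apply (continuity_pt_div (fun _ => 1) (fun y => sigma y ^ 2 * sd y)).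
  - apply continuity_pt_const; intros ? ?; auto.
  - apply (continuity_pt_mult (fun y => sigma y ^ 2) sd); [apply continuity_pt_pow, Hsig, Hx|apply sdens_cont, Hx].
  - apply Rgt_not_eq, Rmult_lt_0_compat; auto.
Qed.

Lemma mdens_sdens x : I x -> md x * sd x = / sigma x ^ 2.
Proof.
  intros Hx; unfold mdens. pose proof (sigma2_pos x Hx). pose proof (sdens_pos x).
  field; repeat split; try lra; auto.
Qed.

Lemma c0_cont : contI a b c0.
Proof.
  destruct HB as [Hrc _]. intros x Hx. apply continuity_pt_locally. intros eps.
  destruct (Hrc x (or_introl Hx) eps (cond_pos eps)) as [d [Hd H]].
  destruct (inI_open a b x Hx) as [d2 [Hd2 Ho]].
  apply locally_of_Rabs. exists (Rmin d d2); split; [apply Rmin_glb_lt; lra|].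
  intros z Hz. pose proof (Rmin_l d d2). pose proof (Rmin_r d d2).
  apply H; [left; apply Ho|]; lra.
Qed.

Lemma c0_nonneg x : I x -> 0 <= c0 x.
Proof. destruct HB as [_ [H _]]. intros Hx; apply H; left; auto. Qed.

Lemma cm_cont : contI a b cm.
Proof. apply contI_mult; [apply c0_cont|apply mdens_cont]. Qed.
Lemma cm_nonneg x : I x -> 0 <= cm x.
Proof. intros Hx. pose proof (c0_nonneg x Hx); pose proof (mdens_pos x Hx). nra. Qed.
Lemma cm2_cont : contI a b cm2.
Proof. apply contI_mult; [apply contI_mult; [apply contI_const|apply c0_cont]|apply mdens_cont]. Qed.
Lemma cm2_nonneg x : I x -> 0 <= cm2 x.
Proof. intros Hx. pose proof (c0_nonneg x Hx); pose proof (mdens_pos x Hx). nra. Qed.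

Lemma IntB_cm_fin : isfin (IntB a b cm x0).
Proof. destruct HB as [_ [_ [_ [_ [_ [_ [H _]]]]]]]. apply H, Hx0. Qed.

Lemma IntB_cm2 y : I y -> IntB a b cm2 y = Fin (2 * T cm y).
Proof.
  intros Hy. apply (limval_b_eq Hx0).
  apply lim_b_ext with (fun z => 2 * RI cm y z).
  - intros z Hz. enough (E : RI cm2 y y - 2 * RI cm y y = RI cm2 y z - 2 * RI cm y z).
    { rewrite (RInt_point_I a b cm2), (RInt_point_I a b cm) in E by (auto; try apply cm_cont; apply cm2_cont). lra. }
    apply (eq_of_derive_zero a b (fun t => RI cm2 y t - 2 * RI cm y t) (fun x => cm2 x - 2 * cm x));
      auto; [|intros; ring].
    intros x Hx. apply (derivable_pt_lim_minus' (fun t => RI cm2 y t) (fun t => 2 * RI cm y t)).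
    + apply (RInt_derive_upper a b cm2); auto. apply cm2_cont.
    + apply (derivable_pt_lim_scal' 2 (fun t => RI cm y t)), (RInt_derive_upper a b cm); auto. apply cm_cont.
  - apply (lim_b_mult Hx0); [apply (lim_b_const Hx0)|].
    apply (tail_spec Hx0 cm cm_cont cm_nonneg IntB_cm_fin y Hy).
Qed.

Lemma tail_cm2 y : I y -> T cm2 y = 2 * T cm y.
Proof. intros Hy. unfold tail at 1. rewrite IntB_cm2; auto. Qed.

Lemma IntB_cm2_fin : isfin (IntB a b cm2 x0).
Proof. rewrite IntB_cm2 by auto. eexists; eauto. Qed.

Lemma cls_a_cases : attainable_a a b mu sigma x0 \/ cls_a a b mu sigma x0 = Natural.
Proof. destruct HC as [[H|[H _]] _]; auto. Qed.
Lemma cls_b_cases : cls_b a b mu sigma x0 = Entrance \/ cls_b a b mu sigma x0 = Natural.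
Proof. destruct HC as [_ [H|[H _]]]; auto. Qed.

Lemma attainable_a_finite : attainable_a a b mu sigma x0 -> exists r, a = Fin r.
Proof.
  intros Hat. destruct a as [r| |] eqn:Ea; eauto; exfalso.
  - destruct Hx0 as [H _]. exact H.
  - destruct HA as [_ [_ [_ [_ [H _]]]]]. specialize (H eq_refl).
    destruct Hat as [Hr|Hr]; rewrite H in Hr; discriminate.
Qed.

Lemma entrance_b_finite : cls_b a b mu sigma x0 = Entrance -> exists r, b = Fin r.
Proof.
  intros He. destruct b as [r| |] eqn:Eb; eauto; exfalso.
  - destruct HA as [_ [_ [_ [_ [_ H]]]]]. specialize (H eq_refl). rewrite H in He; discriminate.
  - destruct Hx0 as [_ H]. exact H.
Qed.

Lemma RInt_sdens_pos y z : I y -> I z -> y < z -> 0 < RI sd y z.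
Proof.
  intros Hy Hz Hyz.
  destruct (MVT_I a b (fun t => RI sd y t) sd y z) as [c [Hc E]]; auto.
  - intros x Hx; apply (RInt_derive_upper a b); auto; apply sdens_cont.
  - rewrite (RInt_point_I a b) in E by (auto; apply sdens_cont). pose proof (sdens_pos c). nra.
Qed.

Local Notation S0 := (fun t => RI sd x0 t).
Local Notation Nf := (fun u => RI sd x0 u * md u).

Lemma S0_derive t : I t -> derivable_pt_lim S0 t (sd t).
Proof. intros; apply (RInt_derive_upper a b sd); auto; apply sdens_cont. Qed.

Lemma S0_le y z : I y -> I z -> y <= z -> S0 y <= S0 z.
Proof. intros. apply (RInt_le_upper a b); auto. apply sdens_cont. intros; apply sdens_nonneg. Qed.

Lemma Nf_cont : contI a b Nf.
Proof. apply contI_mult; [|apply mdens_cont]. apply (contI_of_derivable a b _ sd). apply S0_derive. Qed.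

Lemma Nf_nonneg u : I u -> x0 <= u -> 0 <= Nf u.
Proof.
  intros Hu Hxu. pose proof (mdens_pos u Hu).
  pose proof (RInt_nonneg_I a b sd x0 u sdens_cont (fun x _ => sdens_nonneg x) Hx0 Hu Hxu). nra.
Qed.

Lemma RInt_Nf_le y z : I y -> I z -> x0 <= y -> y <= z -> RI Nf x0 y <= RI Nf x0 z.
Proof.
  intros Hy Hz Hxy Hyz. apply (le_of_derive_nonneg a b (fun t => RI Nf x0 t) Nf); auto.
  - intros; apply (RInt_derive_upper a b Nf); auto; apply Nf_cont.
  - intros c Hc; apply Nf_nonneg; [apply (inI_between a b y c z)|]; auto; lra.
Qed.

Lemma RInt_Nf_bounded_b : cls_b a b mu sigma x0 = Entrance ->
  exists rN, forall z, I z -> x0 < z -> RI Nf x0 z <= rN.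
Proof.
  intros He.
  assert (HN : exists rN, N_b a b mu sigma x0 = Fin rN).
  { unfold cls_b, btype_of in He.
    destruct (Sigma_b a b mu sigma x0); destruct (N_b a b mu sigma x0); try discriminate; eauto. }
  destruct HN as [rN HN].
  assert (Hm : forall x y, I x -> I y -> x <= y -> x0 < x -> RI Nf x0 x <= RI Nf x0 y)
    by (intros; apply RInt_Nf_le; auto; lra).
  destruct (lim_b_nondecreasing (RI Nf x0) x0 Hx0 Hm) as [l [Hl _]].
  assert (l = Fin rN) by (rewrite <- HN; symmetry; apply (limval_b_eq Hx0); exact Hl).
  subst l. exists rN. apply (le_lim_b_of_nondecreasing Hx0 (RI Nf x0) x0); auto.
Qed.

Lemma RInt_mdens_le_Nf y z : I y -> I z -> y <= z -> S0 y * RI md y z <= RI Nf y z.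
Proof.
  intros Hy Hz Hyz.
  pose proof (increment_le_of_derive_le a b (fun t => S0 y * RI md y t) (fun t => S0 y * md t)
    (fun t => RI Nf y t) Nf y z) as H.
  rewrite !(RInt_point_I a b) in H by (auto; try apply mdens_cont; apply Nf_cont).
  rewrite Rmult_0_r, !Rminus_0_r in H. apply H; auto.
  - intros x Hx. apply derivable_pt_lim_scal', (RInt_derive_upper a b md); auto. apply mdens_cont.
  - intros x Hx. apply (RInt_derive_upper a b Nf); auto. apply Nf_cont.
  - intros c Hc. assert (Ic : I c) by (apply (inI_between a b y c z); auto; lra).
    pose proof (mdens_pos c Ic). assert (S0 y <= S0 c) by (apply S0_le; auto; lra). nra.
Qed.

Lemma IntB_mdens_fin : isfin (IntB a b md x0).
Proof.
  destruct cls_b_cases as [He|Hn]; [|destruct HA as [_ [_ [_ [H _]]]]; apply H; auto].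
  destruct (RInt_Nf_bounded_b He) as [rN HrN].
  destruct (inI_exists_gt a b x0 Hx0) as [x1 [Hx1 Hx01]].
  set (s1 := S0 x1). assert (Hs1 : 0 < s1) by (apply RInt_sdens_pos; auto).
  assert (Hbd : forall z, I z -> x1 < z -> RI md x0 z <= RI md x0 x1 + rN / s1).
  { intros z Hz Hx1z.
    pose proof (RInt_mdens_le_Nf x1 z Hx1 Hz ltac:(lra)).
    assert (RI Nf x0 x1 + RI Nf x1 z = RI Nf x0 z) by (apply (RInt_Chasles_I a b); auto; apply Nf_cont).
    assert (0 <= RI Nf x0 x1) by (rewrite <- (RInt_point_I a b Nf x0) by (auto; apply Nf_cont); apply RInt_Nf_le; auto; lra).
    assert (RI md x0 x1 + RI md x1 z = RI md x0 z) by (apply (RInt_Chasles_I a b); auto; apply mdens_cont).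
    specialize (HrN z Hz ltac:(lra)).
    assert (RI md x1 z <= rN / s1).
    { apply Rmult_le_reg_l with s1; auto. replace (s1 * (rN / s1)) with rN by (field; lra). fold s1 in H. lra. }
    lra. }
  pose proof (IntB_is_lim Hx0 md mdens_cont mdens_nonneg x0 Hx0) as Hm.
  destruct (IntB a b md x0) as [r| |] eqn:E; [eexists; eauto| |]; exfalso.
  - refine (lim_b_neq_PInf Hx0 (RI md x0) PInf (RI md x0 x1 + rN / s1) Hm _ eq_refl).
    exists x1; split; [auto|]. intros z Hz Hxz. apply Hbd; auto.
  - refine (lim_b_neq_NInf Hx0 (RI md x0) NInf 0 Hm _ eq_refl).
    exists x0; split; [auto|]. intros z Hz Hxz. apply (RInt_nonneg_I a b); auto; [apply mdens_cont|apply mdens_nonneg|lra].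
Qed.

Lemma tail_cm_derive x : I x -> derivable_pt_lim (T cm) x (- cm x).
Proof. apply (tail_derive Hx0 cm cm_cont cm_nonneg IntB_cm_fin). Qed.
Lemma tail_mdens_derive x : I x -> derivable_pt_lim (T md) x (- md x).
Proof. apply (tail_derive Hx0 md mdens_cont mdens_nonneg IntB_mdens_fin). Qed.
Lemma tail_cm2_cont : contI a b (T cm2).
Proof. apply (tail_cont Hx0 cm2 cm2_cont cm2_nonneg IntB_cm2_fin). Qed.
Lemma tail_mdens_cont : contI a b (T md).
Proof. apply (tail_cont Hx0 md mdens_cont mdens_nonneg IntB_mdens_fin). Qed.
Lemma tail_cm_nonneg x : I x -> 0 <= T cm x.
Proof. apply (tail_nonneg Hx0 cm cm_cont cm_nonneg IntB_cm_fin). Qed.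
Lemma tail_mdens_nonneg x : I x -> 0 <= T md x.
Proof. apply (tail_nonneg Hx0 md mdens_cont mdens_nonneg IntB_mdens_fin). Qed.

Lemma g0_derive x : I x -> derivable_pt_lim g0f x (T cm2 x * sd x).
Proof.
  intros Hx. apply (RInt_derive_upper a b (fun u => T cm2 u * sd u)); auto.
  apply contI_mult; [apply tail_cm2_cont|apply sdens_cont].
Qed.
Lemma zeta_derive x : I x -> derivable_pt_lim zf x (2 * T md x * sd x).
Proof.
  intros Hx. apply (RInt_derive_upper a b (fun u => 2 * T md u * sd u)); auto.
  apply contI_mult; [apply contI_mult; [apply contI_const|apply tail_mdens_cont]|apply sdens_cont].
Qed.

Lemma g0_le x y : I x -> I y -> x <= y -> g0f x <= g0f y.
Proof.
  intros. apply (le_of_derive_nonneg a b g0f (fun t => T cm2 t * sd t)); auto; [apply g0_derive|].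
  intros c Hc. assert (Ic : I c) by (apply (inI_between a b x c y); auto; lra).
  rewrite tail_cm2 by auto. pose proof (tail_cm_nonneg c Ic). pose proof (sdens_pos c). nra.
Qed.
Lemma zeta_le x y : I x -> I y -> x <= y -> zf x <= zf y.
Proof.
  intros. apply (le_of_derive_nonneg a b zf (fun t => 2 * T md t * sd t)); auto; [apply zeta_derive|].
  intros c Hc. assert (Ic : I c) by (apply (inI_between a b x c y); auto; lra).
  pose proof (tail_mdens_nonneg c Ic). pose proof (sdens_pos c). nra.
Qed.

Lemma zeta_x0 : zf x0 = 0.
Proof.
  apply (RInt_point_I a b); auto.
  apply contI_mult; [apply contI_mult; [apply contI_const|apply tail_mdens_cont]|apply sdens_cont].
Qed.

Definition flux x := T cm x - Fs * T md x.
Definition dG0 x := 2 * sd x * flux x.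
Definition d2G0 x := 2 * (- qrate x * sd x) * flux x + 2 * sd x * (- (c0 x - Fs) * md x).

Lemma flux_derive x : I x -> derivable_pt_lim flux x (- (c0 x - Fs) * md x).
Proof.
  intros Hx. apply (derivable_pt_lim_eq_val _ _ (- cm x - Fs * (- md x))); [ring|].
  apply (derivable_pt_lim_minus' (T cm) (fun t => Fs * T md t)); [apply tail_cm_derive; auto|].
  apply (derivable_pt_lim_scal' Fs (T md)), tail_mdens_derive; auto.
Qed.

Lemma flux_cont : contI a b flux.
Proof. apply (contI_of_derivable a b _ _ flux_derive). Qed.

Lemma G0_derive x : I x -> derivable_pt_lim G0f x (dG0 x).
Proof.
  intros Hx. unfold G0. apply (derivable_pt_lim_eq_val _ _ (T cm2 x * sd x - Fs * (2 * T md x * sd x))).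
  { unfold dG0, flux. rewrite tail_cm2 by auto. ring. }
  apply (derivable_pt_lim_minus' g0f (fun t => Fs * zf t)); [apply g0_derive; auto|].
  apply (derivable_pt_lim_scal' Fs zf), zeta_derive; auto.
Qed.

Lemma Dv_G0 x : I x -> Dv G0f x = dG0 x.
Proof. intros; apply Dv_eq, G0_derive; auto. Qed.

Lemma G0_cont : contI a b G0f.
Proof. apply (contI_of_derivable a b G0f dG0). apply G0_derive. Qed.

Lemma dG0_derive x : I x -> derivable_pt_lim dG0 x (d2G0 x).
Proof.
  intros Hx. unfold dG0, d2G0.
  apply (derivable_pt_lim_eq_val _ _ ((0 * sd x + 2 * (- qrate x * sd x)) * flux x + 2 * sd x * (- (c0 x - Fs) * md x)));
    [ring|].
  apply (derivable_pt_lim_mult' (fun t => 2 * sd t) flux); [|apply flux_derive; auto].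
  apply (derivable_pt_lim_mult' (fun _ => 2) sd); [apply derivable_pt_lim_const|apply sdens_derive; auto].
Qed.

Lemma dG0_cont : contI a b dG0.
Proof. apply (contI_of_derivable a b dG0 d2G0). apply dG0_derive. Qed.

Lemma d2G0_cont : contI a b d2G0.
Proof.
  unfold d2G0. apply contI_plus; apply contI_mult.
  - apply contI_mult; [apply contI_const|]. apply contI_mult; [apply contI_opp, qrate_cont|apply sdens_cont].
  - apply flux_cont.
  - apply contI_mult; [apply contI_const|apply sdens_cont].
  - apply contI_mult; [apply contI_opp, contI_minus; [apply c0_cont|apply contI_const]|apply mdens_cont].
Qed.

Lemma generator_G0 x : I x -> sigma x ^ 2 / 2 * d2G0 x + mu x * dG0 x = Fs - c0 x.
Proof.
  intros Hx. unfold d2G0, dG0, qrate. pose proof (mdens_sdens x Hx) as E. pose proof (Hsig0 x Hx).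
  transitivity ((Fs - c0 x) * (sigma x ^ 2 * (md x * sd x))); [field; auto|].
  rewrite E. field. auto.
Qed.

Lemma Fs_lt_of_F0_lt c :
  (exists yh zh, inE a b mu sigma x0 yh /\ inE a b mu sigma x0 zh /\ yh < zh /\
     ereal_lt (F0 a b mu sigma x0 c0 c1 yh zh) (Fin c)) -> Fs < c.
Proof.
  intros [yh [zh [Hy [Hz [Hyz Hlt]]]]].
  destruct HFs as [Hinf _]. specialize (Hinf yh zh (conj Hy (conj Hz (Rlt_le _ _ Hyz)))).
  destruct (F0 a b mu sigma x0 c0 c1 yh zh) as [v| |]; unfold ereal_le, ereal_lt in *; simpl in *;
    destruct Hinf as [H|H]; try discriminate; try tauto; try (injection H; intros; subst); lra.
Qed.

Lemma c0_lim_a_cases : (c0A a b mu sigma x0 c0 = PInf /\ lim_a a b c0 PInf) \/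
  (exists c, c0A a b mu sigma x0 c0 = Fin c /\ lim_a a b c0 (Fin c) /\
     (cls_a a b mu sigma x0 = Natural -> Fs < c)).
Proof.
  destruct HC as [[Hat|[Hnat Hc]] _].
  - destruct (attainable_a_finite Hat) as [r Er]. right. exists (c0 r). split; [|split].
    + unfold c0A. destruct Hat as [H|H]; rewrite H, Er; reflexivity.
    + intros eps He. destruct HB as [Hrc _].
      destruct (Hrc r (or_intror (or_introl (conj Er Hat))) eps He) as [d [Hd Hdd]].
      assert (Hrx : r < x0) by (destruct Hx0 as [H _]; rewrite Er in H; exact H).
      exists (Rmin x0 (r + d / 2)). split.
      * apply (inI_lower a b _ x0); auto; [rewrite Er; simpl; apply Rmin_glb_lt; lra|apply Rmin_l].
      * intros x Hx Hxl. apply Hdd; [left; auto|].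
        assert (r < x) by (destruct Hx as [H _]; rewrite Er in H; exact H).
        pose proof (Rmin_r x0 (r + d / 2)). apply Rabs_def1; lra.
    + intros Hn. destruct Hat as [H|H]; rewrite H in Hn; discriminate.
  - destruct HB as [_ [Hp [Hla _]]]. destruct (Hla Hnat) as [l Hl].
    assert (Ec : c0A a b mu sigma x0 c0 = l) by (unfold c0A; rewrite Hnat; apply (limval_a_eq Hx0); exact Hl).
    destruct l as [c| |].
    + right. exists c. do 2 (split; auto). intros _.
      destruct Hc as [Hp'|[_ [_ Hex]]]; [rewrite Ec in Hp'; discriminate|].
      apply Fs_lt_of_F0_lt. rewrite <- Ec. exact Hex.
    + left; split; auto.
    + exfalso. refine (lim_a_neq_NInf Hx0 c0 NInf 0 Hl _ eq_refl).
      exists x0; split; auto. intros x Hx _. apply Hp. left; auto.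
Qed.

Lemma c0_lim_b_cases : (c0B a b mu sigma x0 c0 = PInf /\ lim_b a b c0 PInf) \/
  (exists c, c0B a b mu sigma x0 c0 = Fin c /\ lim_b a b c0 (Fin c) /\
     (cls_b a b mu sigma x0 = Natural -> Fs < c)).
Proof.
  destruct HC as [_ [Hen|[Hnat Hc]]].
  - destruct (entrance_b_finite Hen) as [r Er]. right. exists (c0 r). split; [|split].
    + unfold c0B. rewrite Hen, Er. reflexivity.
    + intros eps He. destruct HB as [Hrc _].
      destruct (Hrc r (or_intror (or_intror (conj Er Hen))) eps He) as [d [Hd Hdd]].
      assert (Hrx : x0 < r) by (destruct Hx0 as [_ H]; rewrite Er in H; exact H).
      exists (Rmax x0 (r - d / 2)). split.
      * apply (inI_upper a b _ x0); auto; [rewrite Er; simpl; apply Rmax_lub_lt; lra|apply Rmax_l].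
      * intros x Hx Hxl. apply Hdd; [left; auto|].
        assert (x < r) by (destruct Hx as [_ H]; rewrite Er in H; exact H).
        pose proof (Rmax_r x0 (r - d / 2)). apply Rabs_def1; lra.
    + intros Hn. rewrite Hen in Hn; discriminate.
  - destruct HB as [_ [Hp [_ [Hlb _]]]]. destruct (Hlb Hnat) as [l Hl].
    assert (Ec : c0B a b mu sigma x0 c0 = l) by (unfold c0B; rewrite Hnat; apply (limval_b_eq Hx0); exact Hl).
    destruct l as [c| |].
    + right. exists c. do 2 (split; auto). intros _.
      destruct Hc as [Hp'|[_ [_ Hex]]]; [rewrite Ec in Hp'; discriminate|].
      apply Fs_lt_of_F0_lt. rewrite <- Ec. exact Hex.
    + left; split; auto.
    + exfalso. refine (lim_b_neq_NInf Hx0 c0 NInf 0 Hl _ eq_refl).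
      exists x0; split; auto. intros x Hx _. apply Hp. left; auto.
Qed.

Lemma c0_gt_Fs_near_a : cls_a a b mu sigma x0 = Natural -> near_a a b (fun x => Fs < c0 x).
Proof.
  intros Hnat. destruct c0_lim_a_cases as [[_ Hl]|[c [_ [Hl Hfs]]]]; [apply Hl|].
  specialize (Hfs Hnat). apply (near_a_imp (fun x => Rabs (c0 x - c) < c - Fs)); [|apply Hl; lra].
  intros x _ H. apply Rabs_def2 in H. lra.
Qed.

Lemma c0_gt_Fs_near_b : cls_b a b mu sigma x0 = Natural -> near_b a b (fun x => Fs < c0 x).
Proof.
  intros Hnat. destruct c0_lim_b_cases as [[_ Hl]|[c [_ [Hl Hfs]]]]; [apply Hl|].
  specialize (Hfs Hnat). apply (near_b_imp (fun x => Rabs (c0 x - c) < c - Fs)); [|apply Hl; lra].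
  intros x _ H. apply Rabs_def2 in H. lra.
Qed.

Lemma flux_le_of_c0_gt x y : I x -> I y -> x <= y -> (forall c, I c -> x < c < y -> Fs < c0 c) ->
  flux y <= flux x.
Proof.
  intros Hx Hy Hxy Hc. enough (- flux x <= - flux y) by lra.
  apply (le_of_derive_nonneg a b (fun t => - flux t) (fun t => (c0 t - Fs) * md t)); auto.
  - intros z Hz. apply (derivable_pt_lim_eq_val _ _ (- (- (c0 z - Fs) * md z))); [ring|].
    apply derivable_pt_lim_opp, flux_derive; auto.
  - intros c Hc'. assert (Ic : I c) by (apply (inI_between a b x c y); auto; lra).
    pose proof (Hc c Ic Hc'). pose proof (mdens_pos c Ic). nra.
Qed.

Lemma G0_le_of_flux_nonneg x y : I x -> I y -> x <= y -> (forall c, I c -> x < c < y -> 0 <= flux c) ->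
  G0f x <= G0f y.
Proof.
  intros Hx Hy Hxy H. apply (le_of_derive_nonneg a b G0f dG0); auto; [apply G0_derive|].
  intros c Hc. assert (Ic : I c) by (apply (inI_between a b x c y); auto; lra).
  pose proof (H c Ic Hc). pose proof (sdens_pos c). unfold dG0. nra.
Qed.

Lemma G0_ge_of_flux_nonpos x y : I x -> I y -> x <= y -> (forall c, I c -> x < c < y -> flux c <= 0) ->
  G0f y <= G0f x.
Proof.
  intros Hx Hy Hxy H. enough (- G0f x <= - G0f y) by lra.
  apply (le_of_derive_nonneg a b (fun t => - G0f t) (fun t => - dG0 t)); auto.
  - intros z Hz. apply derivable_pt_lim_opp, G0_derive; auto.
  - intros c Hc. assert (Ic : I c) by (apply (inI_between a b x c y); auto; lra).
    pose proof (H c Ic Hc). pose proof (sdens_pos c). unfold dG0. nra.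
Qed.

Lemma G0_lim_a_natural : cls_a a b mu sigma x0 = Natural -> exists l, lim_a a b G0f l.
Proof.
  intros Hnat. destruct (c0_gt_Fs_near_a Hnat) as [y2 [Hy2 Hc]].
  assert (Hfl : forall x y, I x -> I y -> x <= y -> y < y2 -> flux y <= flux x)
    by (intros; apply flux_le_of_c0_gt; auto; intros c Ic Hc'; apply Hc; auto; lra).
  destruct (classic (exists x3, I x3 /\ x3 < y2 /\ 0 < flux x3)) as [[x3 [Hx3 [Hx32 HW]]]|Hn].
  - destruct (lim_a_nondecreasing G0f x3 Hx3) as [l [Hl _]]; [|exists l; auto].
    intros x y Hx Hy Hxy Hyx3. apply G0_le_of_flux_nonneg; auto. intros c Ic Hc'.
    assert (flux x3 <= flux c) by (apply Hfl; auto; lra). lra.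
  - destruct (lim_a_nonincreasing G0f y2 Hy2) as [l [Hl _]]; [|exists l; auto].
    intros x y Hx Hy Hxy Hyx3. apply G0_ge_of_flux_nonpos; auto. intros c Ic Hc'.
    destruct (Rle_dec (flux c) 0) as [|HH]; auto.
    exfalso; apply Hn; exists c; split; auto; split; lra.
Qed.

Lemma G0_lim_b_natural : cls_b a b mu sigma x0 = Natural -> exists l, lim_b a b G0f l.
Proof.
  intros Hnat. destruct (c0_gt_Fs_near_b Hnat) as [z2 [Hz2 Hc]].
  assert (Hfl : forall x y, I x -> I y -> x <= y -> z2 < x -> flux y <= flux x)
    by (intros; apply flux_le_of_c0_gt; auto; intros c Ic Hc'; apply Hc; auto; lra).
  destruct (classic (exists x3, I x3 /\ z2 < x3 /\ flux x3 < 0)) as [[x3 [Hx3 [Hx32 HW]]]|Hn].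
  - destruct (lim_b_nonincreasing G0f x3 Hx3) as [l [Hl _]]; [|exists l; auto].
    intros x y Hx Hy Hxy Hyx3. apply G0_ge_of_flux_nonpos; auto. intros c Ic Hc'.
    assert (flux c <= flux x3) by (apply Hfl; auto; lra). lra.
  - destruct (lim_b_nondecreasing G0f z2 Hz2) as [l [Hl _]]; [|exists l; auto].
    intros x y Hx Hy Hxy Hyx3. apply G0_le_of_flux_nonneg; auto. intros c Ic Hc'.
    destruct (Rle_dec 0 (flux c)) as [|HH]; auto.
    exfalso; apply Hn; exists c; split; auto; split; lra.
Qed.

Lemma cm_tail_excess_le C x y : I x -> I y -> x <= y -> (forall t, I t -> x < t < y -> c0 t <= C) ->
  T cm x - C * T md x <= T cm y - C * T md y.
Proof.
  intros Hx Hy Hxy Hc.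
  apply (le_of_derive_nonneg a b (fun t => T cm t - C * T md t) (fun t => (C - c0 t) * md t)); auto.
  - intros t Ht. apply (derivable_pt_lim_eq_val _ _ (- cm t - C * - md t)); [ring|].
    apply (derivable_pt_lim_minus' (T cm) (fun t => C * T md t)); [apply tail_cm_derive; auto|].
    apply (derivable_pt_lim_scal' C (T md)), tail_mdens_derive; auto.
  - intros t Ht. assert (It : I t) by (apply (inI_between a b x t y); auto; lra).
    pose proof (Hc t It Ht). pose proof (mdens_pos t It). nra.
Qed.

Local Notation Sg := (fun u => RI md u x0 * sd u).

Lemma Sg_cont : contI a b Sg.
Proof.
  apply contI_mult; [|apply sdens_cont]. apply (contI_of_derivable a b _ (fun t => - md t)).
  intros; apply (RInt_derive_lower a b md); auto; apply mdens_cont.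
Qed.

Lemma zeta_bounded_below_a : attainable_a a b mu sigma x0 ->
  exists Z, forall x, I x -> x < x0 -> Z <= zf x.
Proof.
  intros Hat. destruct HA as [HA1 _].
  destruct (RInt_lower_bounded_of_IntA Hx0 sd sdens_cont (fun u _ _ => sdens_nonneg u) (HA1 x0 Hx0)) as [IA HIA].
  destruct (RInt_lower_bounded_of_IntA Hx0 Sg Sg_cont) as [SA HSA].
  { intros u Hu Hux. pose proof (sdens_pos u).
    assert (0 <= RI md u x0) by (apply (RInt_nonneg_I a b); auto; [apply mdens_cont|apply mdens_nonneg|lra]). nra. }
  { unfold attainable_a, cls_a, btype_of in Hat.
    destruct (Sigma_a a b mu sigma x0) eqn:E; destruct (N_a a b mu sigma x0);
      destruct Hat as [H|H]; try discriminate; eexists; eauto. }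
  exists (- (2 * T md x0 * IA + 2 * SA)). intros x Hx Hxx.
  set (Z := fun t => - (2 * T md x0 * RI sd t x0 + 2 * RI Sg t x0)).
  assert (HH : zf x0 - zf x <= Z x0 - Z x).
  { apply (increment_le_of_derive_le a b zf (fun t => 2 * T md t * sd t) Z (fun t => 2 * T md x0 * sd t + 2 * Sg t));
      auto; try lra.
    - apply zeta_derive.
    - intros t Ht. unfold Z. apply (derivable_pt_lim_eq_val _ _ (- (2 * T md x0 * (- sd t) + 2 * (- Sg t)))); [ring|].
      apply derivable_pt_lim_opp, (derivable_pt_lim_plus' (fun t => 2 * T md x0 * RI sd t x0) (fun t => 2 * RI Sg t x0)).
      + apply derivable_pt_lim_scal', (RInt_derive_lower a b sd); auto. apply sdens_cont.
      + apply derivable_pt_lim_scal', (RInt_derive_lower a b Sg); auto. apply Sg_cont.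
    - intros c Hc. assert (Ic : I c) by (apply (inI_between a b x c x0); auto; lra).
      rewrite (proj2 (tail_spec Hx0 md mdens_cont mdens_nonneg IntB_mdens_fin c Ic)). lra. }
  unfold Z in HH. rewrite (RInt_point_I a b sd), (RInt_point_I a b Sg), zeta_x0 in HH
    by (auto; try apply sdens_cont; apply Sg_cont).
  pose proof (HIA x Hx Hxx). pose proof (HSA x Hx Hxx). pose proof (tail_mdens_nonneg x0 Hx0). nra.
Qed.

Lemma g0_bounded_below_a : attainable_a a b mu sigma x0 ->
  exists y4 B, I y4 /\ forall x, I x -> x < y4 -> B <= g0f x.
Proof.
  intros Hat. destruct (zeta_bounded_below_a Hat) as [Z HZ].
  destruct HA as [HA1 _].
  destruct (RInt_lower_bounded_of_IntA Hx0 sd sdens_cont (fun u _ _ => sdens_nonneg u) (HA1 x0 Hx0)) as [IA HIA].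
  destruct c0_lim_a_cases as [[Hp _]|[c [_ [Hlc _]]]].
  { exfalso. unfold c0A in Hp. destruct Hat as [H|H]; rewrite H in Hp; discriminate. }
  set (C := Rabs c + 1). assert (HCp : 0 <= C) by (unfold C; pose proof (Rabs_pos c); lra).
  destruct (near_a_and Hx0 _ _ (lim_a_fin_near_le c0 c Hlc) (near_a_lt a b x0 Hx0)) as [y3 [Hy3 HC3]].
  destruct (inI_exists_lt a b y3 Hy3) as [y4 [Hy4 Hy43]].
  assert (Hy40 : y4 < x0) by (destruct (HC3 y4 Hy4 Hy43); lra).
  set (ps := T cm y4 - C * T md y4).
  exists y4, (g0f y4 - (C * (zf y4 - Z) + 2 * Rabs ps * IA)). split; auto. intros x Hx Hxy.
  assert (Hps : forall t, I t -> t <= y4 -> T cm t <= C * T md t + Rabs ps).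
  { intros t It Hty. pose proof (Rle_abs ps).
    enough (T cm t - C * T md t <= ps) by lra.
    apply cm_tail_excess_le; auto. intros s Is Hs. apply HC3; auto; lra. }
  assert (g0f y4 - g0f x <= (C * zf y4 - 2 * Rabs ps * RI sd y4 x0) - (C * zf x - 2 * Rabs ps * RI sd x x0)).
  { apply (increment_le_of_derive_le a b g0f (fun t => T cm2 t * sd t)
      (fun t => C * zf t - 2 * Rabs ps * RI sd t x0) (fun t => C * (2 * T md t * sd t) + 2 * Rabs ps * sd t));
      auto; try lra.
    - apply g0_derive.
    - intros t Ht. apply (derivable_pt_lim_eq_val _ _ (C * (2 * T md t * sd t) - 2 * Rabs ps * (- sd t))); [ring|].
      apply (derivable_pt_lim_minus' (fun t => C * zf t) (fun t => 2 * Rabs ps * RI sd t x0)).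
      + apply derivable_pt_lim_scal', zeta_derive; auto.
      + apply derivable_pt_lim_scal', (RInt_derive_lower a b sd); auto. apply sdens_cont.
    - intros t Ht. assert (It : I t) by (apply (inI_between a b x t y4); auto; lra).
      rewrite tail_cm2 by auto. pose proof (Hps t It ltac:(lra)). pose proof (sdens_pos t). nra. }
  assert (RI sd x x0 <= IA) by (apply HIA; auto; lra).
  assert (0 <= RI sd y4 x0) by (apply (RInt_nonneg_I a b); auto; [apply sdens_cont|intros; apply sdens_nonneg|lra]).
  assert (Z <= zf x) by (apply HZ; auto; lra).
  pose proof (Rabs_pos ps). nra.
Qed.

Lemma G0_lim_a_attainable : attainable_a a b mu sigma x0 -> exists v, lim_a a b G0f (Fin v).
Proof.
  intros Hat.
  destruct (zeta_bounded_below_a Hat) as [Z HZ].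
  destruct (lim_a_fin_of_nondecreasing_bounded Hx0 zf x0 Z Hx0) as [vz Hvz]; auto.
  { intros; apply zeta_le; auto. }
  destruct (g0_bounded_below_a Hat) as [y4 [B [Hy4 HB4]]].
  destruct (lim_a_fin_of_nondecreasing_bounded Hx0 g0f y4 B Hy4) as [vg Hvg]; auto.
  { intros; apply g0_le; auto. }
  exists (vg + - Fs * vz). unfold G0.
  apply lim_a_ext with (fun x => g0f x + (- Fs) * zf x); [intros; ring|].
  apply (lim_a_plus Hx0); auto. apply (lim_a_mult Hx0); auto. apply (lim_a_const Hx0).
Qed.

Lemma zeta_eq z : I z -> zf z = 2 * (S0 z * T md z + RI Nf x0 z).
Proof.
  intros Hz.
  enough (E : zf x0 - 2 * (S0 x0 * T md x0 + RI Nf x0 x0) = zf z - 2 * (S0 z * T md z + RI Nf x0 z)).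
  { rewrite zeta_x0, (RInt_point_I a b sd), (RInt_point_I a b Nf) in E
      by (auto; try apply sdens_cont; apply Nf_cont). lra. }
  apply (eq_of_derive_zero a b (fun t => zf t - 2 * (S0 t * T md t + RI Nf x0 t)) (fun _ => 0)); auto.
  intros t Ht.
  apply (derivable_pt_lim_eq_val _ _ (2 * T md t * sd t - 2 * ((sd t * T md t + S0 t * (- md t)) + Nf t))); [ring|].
  apply (derivable_pt_lim_minus' zf (fun t => 2 * (S0 t * T md t + RI Nf x0 t))); [apply zeta_derive; auto|].
  apply derivable_pt_lim_scal', (derivable_pt_lim_plus' (fun t => S0 t * T md t) (fun t => RI Nf x0 t)).
  - apply (derivable_pt_lim_mult' S0 (T md)); [apply S0_derive|apply tail_mdens_derive]; auto.
  - apply (RInt_derive_upper a b Nf); auto. apply Nf_cont.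
Qed.

Lemma zeta_bounded_above_b : cls_b a b mu sigma x0 = Entrance ->
  exists B, forall z, I z -> x0 < z -> zf z <= B.
Proof.
  intros He. destruct (RInt_Nf_bounded_b He) as [rN HrN]. exists (2 * rN). intros z Hz Hxz.
  rewrite zeta_eq by auto.
  enough (S0 z * T md z + RI Nf x0 z <= rN) by lra.
  apply (lim_b_le Hx0 (fun w => S0 z * RI md z w + RI Nf x0 z)).
  - exists z; split; auto. intros w Hw Hzw.
    pose proof (RInt_mdens_le_Nf z w Hz Hw ltac:(lra)).
    assert (RI Nf x0 z + RI Nf z w = RI Nf x0 w) by (apply (RInt_Chasles_I a b); auto; apply Nf_cont).
    specialize (HrN w Hw ltac:(lra)). lra.
  - apply (lim_b_plus Hx0); [|apply (lim_b_const Hx0)].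
    apply (lim_b_mult Hx0); [apply (lim_b_const Hx0)|].
    apply (tail_spec Hx0 md mdens_cont mdens_nonneg IntB_mdens_fin z Hz).
Qed.

Lemma g0_bounded_above_b : cls_b a b mu sigma x0 = Entrance ->
  exists z4 B, I z4 /\ forall z, I z -> z4 < z -> g0f z <= B.
Proof.
  intros He. destruct (zeta_bounded_above_b He) as [Z HZ].
  destruct c0_lim_b_cases as [[Hp _]|[c [_ [Hlc _]]]].
  { exfalso. unfold c0B in Hp. rewrite He in Hp; discriminate. }
  set (C := Rabs c + 1). assert (HCp : 0 <= C) by (unfold C; pose proof (Rabs_pos c); lra).
  destruct (near_b_and Hx0 _ _ (lim_b_fin_near_le c0 c Hlc) (near_b_gt a b x0 Hx0)) as [z3 [Hz3 HC3]].
  destruct (inI_exists_gt a b z3 Hz3) as [z4 [Hz4 Hz34]].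
  assert (Hz40 : x0 < z4) by (destruct (HC3 z4 Hz4 Hz34); lra).
  assert (Hps : forall x, I x -> z4 <= x -> T cm x <= C * T md x).
  { intros x Hx Hzx.
    enough (T cm x - C * T md x <= 0) by lra.
    apply (le_lim_b_of_nondecreasing Hx0 (fun t => T cm t - C * T md t) z3); auto; try lra.
    - intros u v Hu Hv Huv Hzu. apply cm_tail_excess_le; auto. intros s Is Hs. apply HC3; auto; lra.
    - replace 0 with (0 + (- C) * 0) by ring.
      apply lim_b_ext with (fun t => T cm t + (- C) * T md t); [intros; ring|].
      apply (lim_b_plus Hx0); [apply (tail_lim_b Hx0 cm cm_cont cm_nonneg IntB_cm_fin)|].
      apply (lim_b_mult Hx0); [apply (lim_b_const Hx0)|].
      apply (tail_lim_b Hx0 md mdens_cont mdens_nonneg IntB_mdens_fin). }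
  exists z4, (g0f z4 + C * (Z - zf z4)). split; auto. intros z Hz Hzz.
  assert (g0f z - g0f z4 <= C * zf z - C * zf z4).
  { apply (increment_le_of_derive_le a b g0f (fun t => T cm2 t * sd t) (fun t => C * zf t)
      (fun t => C * (2 * T md t * sd t)) z4 z); auto; try lra.
    - apply g0_derive.
    - intros t Ht. apply derivable_pt_lim_scal', zeta_derive; auto.
    - intros t Ht. assert (It : I t) by (apply (inI_between a b z4 t z); auto; lra).
      rewrite tail_cm2 by auto. pose proof (Hps t It ltac:(lra)). pose proof (sdens_pos t). nra. }
  assert (zf z <= Z) by (apply HZ; auto; lra).
  assert (zf z4 <= zf z) by (apply zeta_le; auto; lra). nra.
Qed.

Lemma G0_lim_b_entrance : cls_b a b mu sigma x0 = Entrance -> exists v, lim_b a b G0f (Fin v).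
Proof.
  intros He.
  destruct (zeta_bounded_above_b He) as [Z HZ].
  destruct (lim_b_fin_of_nondecreasing_bounded Hx0 zf x0 Z Hx0) as [vz Hvz]; auto.
  { intros; apply zeta_le; auto. }
  destruct (g0_bounded_above_b He) as [z4 [B [Hz4 HB4]]].
  destruct (lim_b_fin_of_nondecreasing_bounded Hx0 g0f z4 B Hz4) as [vg Hvg]; auto.
  { intros; apply g0_le; auto. }
  exists (vg + - Fs * vz). unfold G0.
  apply lim_b_ext with (fun x => g0f x + (- Fs) * zf x); [intros; ring|].
  apply (lim_b_plus Hx0); auto. apply (lim_b_mult Hx0); auto. apply (lim_b_const Hx0).
Qed.

Lemma G0_lim_a : exists l, lim_a a b G0f l /\ (attainable_a a b mu sigma x0 -> exists v, l = Fin v).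
Proof.
  destruct cls_a_cases as [Hat|Hnat].
  - destruct (G0_lim_a_attainable Hat) as [v Hv]. exists (Fin v); split; eauto.
  - destruct (G0_lim_a_natural Hnat) as [l Hl]. exists l; split; auto.
    intros [H|H]; rewrite Hnat in H; discriminate.
Qed.

Lemma G0_lim_b : exists l, lim_b a b G0f l.
Proof.
  destruct cls_b_cases as [Hen|Hnat].
  - destruct (G0_lim_b_entrance Hen) as [v Hv]. exists (Fin v); auto.
  - apply (G0_lim_b_natural Hnat).
Qed.

Variable k : R.
Hypothesis Hk : 0 < k <= 1.

Definition Gk x := Phi k (G0f x).
Definition dGk x := dPhi k (G0f x) * dG0 x.
Definition d2Gk x := d2Phi k (G0f x) * dG0 x * dG0 x + dPhi k (G0f x) * d2G0 x.
Definition AGk x := dPhi k (G0f x) * (Fs - c0 x) + / 2 * d2Phi k (G0f x) * (sigma x * dG0 x) ^ 2.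

Lemma Gk_derive x : I x -> derivable_pt_lim Gk x (dGk x).
Proof.
  intros Hx. apply (derivable_pt_lim_comp G0f (Phi k)); [apply G0_derive; auto|apply Phi_derive; auto].
Qed.

Lemma dGk_derive x : I x -> derivable_pt_lim dGk x (d2Gk x).
Proof.
  intros Hx. unfold dGk, d2Gk.
  apply (derivable_pt_lim_eq_val _ _ ((d2Phi k (G0f x) * dG0 x) * dG0 x + dPhi k (G0f x) * d2G0 x)); [ring|].
  apply (derivable_pt_lim_mult' (fun t => dPhi k (G0f t)) dG0); [|apply dG0_derive; auto].
  apply (derivable_pt_lim_comp G0f (dPhi k)); [apply G0_derive; auto|apply dPhi_derive; auto].
Qed.

Lemma Dv_Gk x : I x -> Dv Gk x = dGk x.
Proof. intros; apply Dv_eq, Gk_derive; auto. Qed.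

Lemma Dv_Gk_derive x : I x -> derivable_pt_lim (Dv Gk) x (d2Gk x).
Proof.
  intros Hx. apply derivable_pt_lim_loc with dGk; [|apply dGk_derive; auto].
  destruct (inI_open a b x Hx) as [d [Hd H]]. exists d; split; auto. intros z Hz. apply Dv_Gk, H, Hz.
Qed.

Lemma DvDv_Gk x : I x -> Dv (Dv Gk) x = d2Gk x.
Proof. intros; apply Dv_eq, Dv_Gk_derive; auto. Qed.

Lemma contI_comp_G0 (phi : R -> R) : (forall t, continuity_pt phi t) -> contI a b (fun x => phi (G0f x)).
Proof. intros Hp x Hx. apply (continuity_pt_comp G0f phi); [apply G0_cont; auto|apply Hp]. Qed.

Lemma d2Gk_cont : contI a b d2Gk.
Proof.
  unfold d2Gk. apply contI_plus.
  - apply contI_mult; [apply contI_mult|]; [apply contI_comp_G0, d2Phi_cont; auto|apply dG0_cont|apply dG0_cont].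
  - apply contI_mult; [apply contI_comp_G0, dPhi_cont; auto|apply d2G0_cont].
Qed.

Lemma DvDv_Gk_cont x : I x -> continuity_pt (Dv (Dv Gk)) x.
Proof.
  intros Hx. apply continuity_pt_loc with d2Gk; [|apply d2Gk_cont; auto].
  destruct (inI_open a b x Hx) as [d [Hd H]]. exists d; split; auto. intros z Hz. apply DvDv_Gk, H, Hz.
Qed.

Lemma Agen_Gk x : I x -> Agen mu sigma Gk x = AGk x.
Proof.
  intros Hx. unfold Agen, AGk. rewrite DvDv_Gk, Dv_Gk by auto. unfold dGk, d2Gk.
  rewrite <- (generator_G0 x Hx). field.
Qed.

Lemma AGk_cont : contI a b AGk.
Proof.
  unfold AGk. apply contI_plus.
  - apply contI_mult; [apply contI_comp_G0, dPhi_cont; auto|apply contI_minus; [apply contI_const|apply c0_cont]].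
  - apply contI_mult; [apply contI_mult; [apply contI_const|apply contI_comp_G0, d2Phi_cont; auto]|].
    intros x Hx. apply continuity_pt_pow, (continuity_pt_mult sigma dG0); [apply Hsig|apply dG0_cont]; auto.
Qed.

Lemma sigma_dGk_cont : contI a b (fun x => (sigma x * dGk x) ^ 2).
Proof.
  intros x Hx. apply continuity_pt_pow, (continuity_pt_mult sigma dGk); [apply Hsig; auto|].
  apply (contI_of_derivable a b dGk d2Gk dGk_derive); auto.
Qed.

Definition G0size x := 1 + Rabs (G0f x).

Lemma G0size_ge_1 x : 1 <= G0size x.
Proof. unfold G0size; pose proof (Rabs_pos (G0f x)); lra. Qed.

Definition growth_bound L x := (sigma x * dG0 x) ^ 2 <= L * G0size x ^ 3 /\ c0 x <= L * G0size x ^ 2.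

Lemma growth_near_a : exists L, 0 <= L /\ near_a a b (growth_bound L).
Proof.
  destruct HD as [[L [y1 [Hy1 [HP HF]]]] _].
  destruct c0_lim_a_cases as [[Hp _]|[c [Hc [Hlc _]]]].
  - exists (Rabs L). split; [apply Rabs_pos|]. exists y1; split; auto. intros x Hx Hxy.
    specialize (HP Hp x Hx Hxy). rewrite Dv_G0 in HP by auto.
    apply growth_of_bound_a; auto; [apply G0size_ge_1|apply pow2_ge_0|apply c0_nonneg; auto].
  - destruct (HF (ex_intro _ c Hc)) as [e [He HF2]].
    exists (Rabs L + (Rabs c + 1)). split; [pose proof (Rabs_pos L); pose proof (Rabs_pos c); lra|].
    apply (near_a_imp (fun x => c0 x <= Rabs c + 1 /\ x < y1));
      [|apply (near_a_and Hx0); [apply lim_a_fin_near_le; auto|apply near_a_lt; auto]].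
    intros x Hx [H1 H2]. specialize (HF2 x Hx H2). rewrite Dv_G0 in HF2 by auto.
    apply (growth_of_Rpower_bound _ _ _ e); auto; [apply G0size_ge_1|pose proof (Rabs_pos c); lra].
Qed.

Lemma growth_near_b : exists L, 0 <= L /\ near_b a b (growth_bound L).
Proof.
  destruct HD as [_ [[L [z1 [Hz1 [HP HF]]]] _]].
  destruct c0_lim_b_cases as [[Hp _]|[c [Hc [Hlc _]]]].
  - exists (Rabs L + L * L). split; [pose proof (Rabs_pos L); nra|]. exists z1; split; auto. intros x Hx Hxy.
    specialize (HP Hp x Hx Hxy). rewrite Dv_G0 in HP by auto.
    apply growth_of_bound_b; auto; [apply G0size_ge_1|apply pow2_ge_0|apply c0_nonneg; auto].
  - destruct (HF (ex_intro _ c Hc)) as [e [He HF2]].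
    exists (Rabs L + (Rabs c + 1)). split; [pose proof (Rabs_pos L); pose proof (Rabs_pos c); lra|].
    apply (near_b_imp (fun x => c0 x <= Rabs c + 1 /\ z1 < x));
      [|apply (near_b_and Hx0); [apply lim_b_fin_near_le; auto|apply near_b_gt; auto]].
    intros x Hx [H1 H2]. specialize (HF2 x Hx H2). rewrite !Dv_G0 in HF2 by auto.
    pose proof (G0size_ge_1 x). pose proof (c0_nonneg x Hx).
    assert (0 <= (sigma x * dG0 x) ^ 2 / (G0size x * (1 + c0 x)))
      by (apply Rdiv_le_0_compat; [apply pow2_ge_0|nra]).
    apply (growth_of_Rpower_bound _ _ _ e); auto; [pose proof (Rabs_pos c); lra|].
    fold (G0size x) in HF2. lra.
Qed.

Lemma dPhi_G0_decay x : Rabs (dPhi k (G0f x)) <= KPhi k / G0size x ^ 2.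
Proof. apply dPhi_decay, Hk. Qed.
Lemma d2Phi_G0_decay x : Rabs (d2Phi k (G0f x)) <= KPhi k / G0size x ^ 3.
Proof. apply d2Phi_decay, Hk. Qed.

Lemma sigma_dGk_le L x : 0 <= L -> growth_bound L x -> Rabs ((sigma x * dGk x) ^ 2) <= KPhi k * KPhi k * L.
Proof.
  intros HL [Hs _]. rewrite Rabs_right by (apply Rle_ge, pow2_ge_0).
  replace ((sigma x * dGk x) ^ 2) with (dPhi k (G0f x) ^ 2 * (sigma x * dG0 x) ^ 2) by (unfold dGk; ring).
  apply (sq_mul_le_of_decay _ _ _ (G0size x)); auto.
  - apply G0size_ge_1.
  - apply Rlt_le, KPhi_pos, Hk.
  - apply dPhi_G0_decay.
  - apply pow2_ge_0.
Qed.

Lemma AGk_le L x : I x -> 0 <= L -> growth_bound L x -> Rabs (AGk x) <= KPhi k * (Rabs Fs + L) + KPhi k * Rabs L.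
Proof.
  intros Hx HL [Hs Hc]. pose proof (G0size_ge_1 x). pose proof (KPhi_pos k Hk).
  unfold AGk. eapply Rle_trans; [apply Rabs_triang|]. apply Rplus_le_compat.
  - apply (mul_sub_le_of_decay _ _ _ (G0size x)); auto; [lra|apply dPhi_G0_decay|apply c0_nonneg; auto].
  - apply (half_mul_le_of_decay _ _ _ (G0size x)); auto; [lra|apply d2Phi_G0_decay|apply pow2_ge_0].
Qed.

Lemma sigma_dGk_bounded : exists B, forall x, I x -> (sigma x * Dv Gk x) ^ 2 <= B * (1 + c0 x).
Proof.
  destruct growth_near_a as [La [HLa Ha]]. destruct growth_near_b as [Lb [HLb Hb]].
  destruct (bounded_of_near_ends a b (fun x => (sigma x * dGk x) ^ 2) (KPhi k * KPhi k * La)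
    (KPhi k * KPhi k * Lb) sigma_dGk_cont) as [B HB'].
  - apply (near_a_imp _ _ (fun x _ H => sigma_dGk_le La x HLa H) Ha).
  - apply (near_b_imp _ _ (fun x _ H => sigma_dGk_le Lb x HLb H) Hb).
  - exists (Rabs B). intros x Hx. rewrite Dv_Gk by auto. specialize (HB' x Hx).
    rewrite Rabs_right in HB' by (apply Rle_ge, pow2_ge_0). pose proof (c0_nonneg x Hx).
    pose proof (Rle_abs B). pose proof (Rabs_pos B). nra.
Qed.

Lemma Agen_Gk_bounded : exists B, forall x, I x -> Rabs (Agen mu sigma Gk x) <= B.
Proof.
  destruct growth_near_a as [La [HLa Ha]]. destruct growth_near_b as [Lb [HLb Hb]].
  destruct (bounded_of_near_ends a b AGk (KPhi k * (Rabs Fs + La) + KPhi k * Rabs La)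
    (KPhi k * (Rabs Fs + Lb) + KPhi k * Rabs Lb) AGk_cont) as [B HB'].
  - apply (near_a_imp _ _ (fun x Hx H => AGk_le La x Hx HLa H) Ha).
  - apply (near_b_imp _ _ (fun x Hx H => AGk_le Lb x Hx HLb H) Hb).
  - exists B. intros x Hx. rewrite Agen_Gk by auto. auto.
Qed.

Section GeneralFilter.
Context (F : (R -> Prop) -> Prop) {FF : Filter F}.

Lemma Gk_filterlim_PInf : (forall M, F (fun x => M < G0f x)) -> filterlim Gk F (locally (/ k)).
Proof.
  intros H. apply filterlim_locally. intros eps. destruct (Phi_lim_inf k Hk eps (cond_pos eps)) as [M HM].
  generalize (H M). apply filter_imp. intros x Hx. change (Rabs (Gk x - / k) < eps). apply HM; auto.
Qed.

Lemma Gk_filterlim_NInf : (forall M, F (fun x => G0f x < M)) -> filterlim Gk F (locally (- / k)).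
Proof.
  intros H. apply filterlim_locally. intros eps. destruct (Phi_lim_inf k Hk eps (cond_pos eps)) as [M HM].
  generalize (H (- M)). apply filter_imp. intros x Hx. change (Rabs (Gk x - - / k) < eps).
  unfold Gk. replace (G0f x) with (- - G0f x) by ring. rewrite (Phi_opp k Hk).
  replace (- Phi k (- G0f x) - - / k) with (- (Phi k (- G0f x) - / k)) by ring.
  rewrite Rabs_Ropp. apply HM; lra.
Qed.

Lemma filterlim_zero_of_G0size_large (f : R -> R) (Q : R -> Prop) :
  (forall M, F (fun x => M < G0size x)) -> F Q ->
  (forall eps, 0 < eps -> exists M, forall x, Q x -> M < G0size x -> Rabs (f x) < eps) ->
  filterlim f F (locally 0).
Proof.
  intros Hg HQ H. apply filterlim_locally. intros eps. destruct (H eps (cond_pos eps)) as [M HM].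
  generalize (filter_and _ _ HQ (Hg M)). apply filter_imp. intros x [H1 H2].
  change (Rabs (f x - 0) < eps). rewrite Rminus_0_r. apply HM; auto.
Qed.

Lemma dPhi_G0_filterlim_zero : (forall M, F (fun x => M < G0size x)) ->
  filterlim (fun x => dPhi k (G0f x)) F (locally 0).
Proof.
  intros Hg. apply (filterlim_zero_of_G0size_large _ (fun _ => True) Hg); [apply filter_true|].
  intros eps He. pose proof (KPhi_pos k Hk). exists (KPhi k / eps). intros x _ Hx.
  pose proof (G0size_ge_1 x). eapply Rle_lt_trans; [apply dPhi_G0_decay|].
  apply Rmult_lt_reg_r with (G0size x ^ 2); [apply pow_lt; lra|].
  unfold Rdiv at 1; rewrite Rmult_assoc, Rinv_l, Rmult_1_r by (apply pow_nonzero; lra).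
  apply Rmult_lt_compat_l with (r := eps) in Hx; auto.
  replace (eps * (KPhi k / eps)) with (KPhi k) in Hx by (field; lra). simpl. nra.
Qed.

Lemma d2Phi_term_filterlim_zero L e : 0 < e < 1 -> (forall M, F (fun x => M < G0size x)) ->
  F (fun x => (sigma x * dG0 x) ^ 2 <= L * Rpower (G0size x) (2 + e)) ->
  filterlim (fun x => / 2 * d2Phi k (G0f x) * (sigma x * dG0 x) ^ 2) F (locally 0).
Proof.
  intros He Hg HL. apply (filterlim_zero_of_G0size_large _ _ Hg HL).
  intros eps Heps. pose proof (KPhi_pos k Hk).
  set (C := KPhi k * Rabs L + 1). assert (HCpos : 0 < C) by (unfold C; pose proof (Rabs_pos L); nra).
  destruct (Rpower_neg_small (e - 1) (eps / C) ltac:(lra) ltac:(apply Rdiv_lt_0_compat; lra)) as [M HM].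
  exists M. intros x Hx HMx. pose proof (G0size_ge_1 x).
  eapply Rle_lt_trans.
  { apply (half_mul_le_of_decay_Rpower (KPhi k) L _ (G0size x) _ e); auto;
      [lra|apply d2Phi_G0_decay|apply pow2_ge_0]. }
  specialize (HM (G0size x) HMx (G0size_ge_1 x)). pose proof (Rabs_pos L).
  assert (0 < Rpower (G0size x) (e - 1)) by (apply Rpower_pos; lra).
  apply Rle_lt_trans with (C * Rpower (G0size x) (e - 1)); [unfold C; nra|].
  apply Rmult_lt_compat_l with (r := C) in HM; auto. replace (C * (eps / C)) with eps in HM by (field; lra). lra.
Qed.

Lemma AGk_filterlim_of_G0_fin g r c : filterlim G0f F (locally g) ->
  filterlim (fun x => sigma x * dG0 x) F (locally r) -> filterlim c0 F (locally c) ->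
  exists v, filterlim AGk F (locally v).
Proof.
  intros Hg Hr Hc. eexists. unfold AGk.
  apply (filterlim_Rplus F); apply (filterlim_Rmult F).
  - apply (filterlim_continuity_pt_comp F); [exact Hg|apply (dPhi_cont k Hk)].
  - apply (filterlim_Rplus F) with (f := fun _ => Fs) (g := fun x => - c0 x); [apply (filterlim_const (F := F))|].
    apply (filterlim_continuity_pt_comp F c0 Ropp); [exact Hc|apply continuity_pt_opp, continuity_pt_id].
  - apply (filterlim_Rmult F); [apply (filterlim_const (F := F))|].
    apply (filterlim_continuity_pt_comp F); [exact Hg|apply (d2Phi_cont k Hk)].
  - apply (filterlim_continuity_pt_comp F (fun x => sigma x * dG0 x) (fun t => t ^ 2)); [exact Hr|].
    apply continuity_pt_pow, continuity_pt_id.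
Qed.

Lemma AGk_filterlim_of_G0_large c L e : filterlim c0 F (locally c) -> 0 < e < 1 ->
  (forall M, F (fun x => M < G0size x)) ->
  F (fun x => (sigma x * dG0 x) ^ 2 <= L * Rpower (G0size x) (2 + e)) ->
  filterlim AGk F (locally 0).
Proof.
  intros Hc He Hg HL. replace 0 with (0 * (Fs + - c) + 0) by ring. unfold AGk.
  apply (filterlim_Rplus F).
  - apply (filterlim_Rmult F); [apply dPhi_G0_filterlim_zero; auto|].
    apply (filterlim_Rplus F) with (f := fun _ => Fs) (g := fun x => - c0 x); [apply (filterlim_const (F := F))|].
    apply (filterlim_continuity_pt_comp F c0 Ropp); [exact Hc|apply continuity_pt_opp, continuity_pt_id].
  - apply (d2Phi_term_filterlim_zero L e); auto.
Qed.

End GeneralFilter.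

Lemma Gk_lim_a l : lim_a a b G0f l -> exists v, lim_a a b Gk (Fin v).
Proof.
  intros Hl. destruct l as [g| |].
  - exists (Phi k g). apply (lim_a_comp Hx0 G0f (Phi k) g Hl), Phi_cont; auto.
  - exists (/ k). apply (lim_a_filterlim Hx0); apply (Gk_filterlim_PInf (near_a a b)); apply Hl.
  - exists (- / k). apply (lim_a_filterlim Hx0); apply (Gk_filterlim_NInf (near_a a b)); apply Hl.
Qed.

Lemma Gk_lim_b l : lim_b a b G0f l -> exists v, lim_b a b Gk (Fin v).
Proof.
  intros Hl. destruct l as [g| |].
  - exists (Phi k g). apply (lim_b_comp Hx0 G0f (Phi k) g Hl), Phi_cont; auto.
  - exists (/ k). apply (lim_b_filterlim Hx0); apply (Gk_filterlim_PInf (near_b a b)); apply Hl.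
  - exists (- / k). apply (lim_b_filterlim Hx0); apply (Gk_filterlim_NInf (near_b a b)); apply Hl.
Qed.

Lemma dPhi_G0_lim_a l : lim_a a b G0f l -> exists d, lim_a a b (fun x => dPhi k (G0f x)) (Fin d).
Proof.
  intros Hl. destruct l as [g| |].
  - exists (dPhi k g). apply (lim_a_comp Hx0 G0f (dPhi k) g Hl), dPhi_cont; auto.
  - exists 0. apply (lim_a_filterlim Hx0); apply (dPhi_G0_filterlim_zero (near_a a b)); apply (lim_a_infinite_abs_large G0f PInf Hl); auto.
  - exists 0. apply (lim_a_filterlim Hx0); apply (dPhi_G0_filterlim_zero (near_a a b)); apply (lim_a_infinite_abs_large G0f NInf Hl); auto.
Qed.

Lemma sigma_dG0_lim_a r : lim_a a b (fun x => sigma x * Dv G0f x) (Fin r) ->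
  lim_a a b (fun x => sigma x * dG0 x) (Fin r).
Proof. apply lim_a_ext. intros x Hx. rewrite Dv_G0 by auto. reflexivity. Qed.
Lemma sigma_dG0_lim_b r : lim_b a b (fun x => sigma x * Dv G0f x) (Fin r) ->
  lim_b a b (fun x => sigma x * dG0 x) (Fin r).
Proof. apply lim_b_ext. intros x Hx. rewrite Dv_G0 by auto. reflexivity. Qed.

Lemma Agen_Gk_lim_a : isfin (c0A a b mu sigma x0 c0) -> exists v, lim_a a b (Agen mu sigma Gk) (Fin v).
Proof.
  intros Hfin. destruct c0_lim_a_cases as [[Hp _]|[c [_ [Hlc _]]]].
  { destruct Hfin as [r Hr]. rewrite Hp in Hr; discriminate. }
  enough (H : exists v, lim_a a b AGk (Fin v)).
  { destruct H as [v Hv]. exists v. apply (lim_a_ext AGk); auto. intros; symmetry; apply Agen_Gk; auto. }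
  rewrite (lim_a_filterlim Hx0) in Hlc.
  destruct HD as [[L [y1 [Hy1 [_ HF]]]] [_ [Dca _]]].
  destruct G0_lim_a as [[g| |] [Hl _]].
  - assert (Hne : Fin g <> NInf) by discriminate.
    destruct (Dca (or_introl (ex_intro _ (Fin g) (conj Hl Hne)))) as [r Hr].
    apply (lim_a_filterlim Hx0) in Hl. apply sigma_dG0_lim_a, (lim_a_filterlim Hx0) in Hr.
    destruct (AGk_filterlim_of_G0_fin (near_a a b) g r c Hl Hr Hlc) as [v Hv].
    exists v. apply (lim_a_filterlim Hx0), Hv.
  all: destruct (HF Hfin) as [e [He HF2]]; exists 0; apply (lim_a_filterlim Hx0).
  all: apply (AGk_filterlim_of_G0_large (near_a a b) c (Rabs L) e); auto;
    [apply (lim_a_infinite_abs_large G0f _ Hl); auto|].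
  all: exists y1; split; auto; intros x Hx Hxy; specialize (HF2 x Hx Hxy); rewrite Dv_G0 in HF2 by auto;
    apply le_mul_of_div_le; auto; apply Rpower_pos; pose proof (G0size_ge_1 x); unfold G0size in *; lra.
Qed.

Lemma Agen_Gk_lim_b : isfin (c0B a b mu sigma x0 c0) -> exists v, lim_b a b (Agen mu sigma Gk) (Fin v).
Proof.
  intros Hfin. destruct c0_lim_b_cases as [[Hp _]|[c [_ [Hlc _]]]].
  { destruct Hfin as [r Hr]. rewrite Hp in Hr; discriminate. }
  enough (H : exists v, lim_b a b AGk (Fin v)).
  { destruct H as [v Hv]. exists v. apply (lim_b_ext AGk); auto. intros; symmetry; apply Agen_Gk; auto. }
  rewrite (lim_b_filterlim Hx0) in Hlc.
  destruct HD as [_ [[L [z1 [Hz1 [_ HF]]]] [_ Dcb]]].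
  destruct G0_lim_b as [[g| |] Hl].
  - assert (Hne : Fin g <> PInf) by discriminate.
    destruct (Dcb (ex_intro _ (Fin g) (conj Hl Hne))) as [r Hr].
    apply (lim_b_filterlim Hx0) in Hl. apply sigma_dG0_lim_b, (lim_b_filterlim Hx0) in Hr.
    destruct (AGk_filterlim_of_G0_fin (near_b a b) g r c Hl Hr Hlc) as [v Hv].
    exists v. apply (lim_b_filterlim Hx0), Hv.
  all: destruct (HF Hfin) as [e [He HF2]]; exists 0; apply (lim_b_filterlim Hx0).
  all: apply (AGk_filterlim_of_G0_large (near_b a b) c (Rabs L) e); auto;
    [apply (lim_b_infinite_abs_large G0f _ Hl); auto|].
  all: exists z1; split; auto; intros x Hx Hxy; specialize (HF2 x Hx Hxy); rewrite !Dv_G0 in HF2 by auto;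
    pose proof (G0size_ge_1 x); pose proof (c0_nonneg x Hx); apply le_mul_of_div_le;
    [apply Rpower_pos; unfold G0size in *; lra|].
  all: assert (0 <= (sigma x * dG0 x) ^ 2 / ((1 + Rabs (G0f x)) * (1 + c0 x)))
    by (apply Rdiv_le_0_compat; [apply pow2_ge_0|unfold G0size in *; nra]); unfold G0size; lra.
Qed.

Lemma sigma_dGk_lim_a_sticky : sticky_a a b mu sigma x0 stickya /\ isfin (c0A a b mu sigma x0 c0) ->
  exists v, lim_a a b (fun x => sigma x * Dv Gk x) (Fin v).
Proof.
  intros Hs. destruct HD as [_ [_ [Dca _]]]. destruct (Dca (or_intror Hs)) as [r Hr].
  destruct G0_lim_a as [l [Hl _]]. destruct (dPhi_G0_lim_a l Hl) as [d Hd].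
  exists (d * r). apply lim_a_ext with (fun x => dPhi k (G0f x) * (sigma x * dG0 x)).
  - intros x Hx. rewrite Dv_Gk by auto. unfold dGk; ring.
  - apply (lim_a_mult Hx0); auto. apply sigma_dG0_lim_a, Hr.
Qed.

Lemma dG0_lim_a_reflecting : reflecting_a a b mu sigma x0 stickya -> exists d, lim_a a b dG0 (Fin d).
Proof.
  intros Hrf.
  destruct HA as [_ [_ [HA3 _]]]. destruct (HA3 Hrf) as [rA HrA].
  destruct HB as [_ [_ [_ [_ [_ [_ [_ [HB8 _]]]]]]]]. destruct (HB8 Hrf) as [rB HrB].
  exists (2 * rB + (- 2 * Fs) * rA).
  apply lim_a_ext with (fun x => 2 * (sd x * T cm x) + (- 2 * Fs) * (sd x * T md x)).
  - intros x Hx. unfold dG0, flux. ring.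
  - apply (lim_a_plus Hx0); apply (lim_a_mult Hx0); auto; apply (lim_a_const Hx0).
Qed.

Lemma Gk_rderiv_a_reflecting : reflecting_a a b mu sigma x0 stickya ->
  exists d, rderiv (inEbar a b) (valE a b Gk) (real_of a) d.
Proof.
  intros Hrf. assert (Hat : attainable_a a b mu sigma x0) by (left; apply Hrf).
  destruct (attainable_a_finite Hat) as [r Er].
  destruct G0_lim_a as [l [Hl Hlf]]. destruct (Hlf Hat) as [g ->].
  destruct (dPhi_G0_lim_a _ Hl) as [p Hp]. destruct (dG0_lim_a_reflecting Hrf) as [d Hd].
  exists (p * d). replace (real_of a) with r by (rewrite Er; reflexivity).
  apply (rderiv_a_of_lim_derive Hx0 r Gk dGk (Phi k g) (p * d) Er Gk_derive).
  - apply (lim_a_comp Hx0 G0f (Phi k) g Hl), Phi_cont; auto.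
  - apply (lim_a_mult Hx0); auto.
Qed.

Lemma Gk_in_classD : in_classD a b mu sigma x0 stickya c0 Gk.
Proof.
  split; [|split; [|split]].
  - intros x Hx. rewrite DvDv_Gk, Dv_Gk by auto.
    split; [apply Gk_derive; auto|split; [apply Dv_Gk_derive; auto|]].
    apply DvDv_Gk_cont; auto.
  - intros r _. destruct G0_lim_a as [l [Hl _]]. apply (Gk_lim_a l Hl).
  - intros r _. destruct G0_lim_b as [l Hl]. apply (Gk_lim_b l Hl).
  - destruct sigma_dGk_bounded as [B1 HB1]. destruct Agen_Gk_bounded as [B2 HB2].
    exists (/ k + Rabs B1 + Rabs B2).
    assert (Hk1 : 0 < / k) by (apply Rinv_0_lt_compat; lra).
    pose proof (Rabs_pos B1). pose proof (Rabs_pos B2). pose proof (Rle_abs B1). pose proof (Rle_abs B2).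
    repeat split.
    + intros x Hx. pose proof (Phi_bound k Hk (G0f x)). unfold Gk. lra.
    + intros x Hx. specialize (HB1 x Hx). pose proof (c0_nonneg x Hx).
      eapply Rle_trans; [exact HB1|]. apply Rmult_le_compat_r; lra.
    + intros x Hx. specialize (HB2 x Hx). lra.
    + apply Agen_Gk_lim_a.
    + apply Agen_Gk_lim_b.
    + apply Gk_rderiv_a_reflecting.
    + apply sigma_dGk_lim_a_sticky.
Qed.

End Diffusion.

Theorem lemma5p8
  (a b : ereal) (mu sigma : R -> R) (x0 : R) (stickya : bool)
  (c0 : R -> R) (c1 : R -> R -> ereal) (Fs : R)
  (Hab : ereal_lt a b)
  (Hx0 : inI a b x0)
  (Hmu : forall x, inI a b x -> continuity_pt mu x)
  (Hsig : forall x, inI a b x -> continuity_pt sigma x)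
  (Hsig0 : forall x, inI a b x -> sigma x <> 0)
  (HA : Condition_A a b mu sigma x0 stickya)
  (HB : Condition_B a b mu sigma x0 stickya c0 c1)
  (HFs : F0_inf a b mu sigma x0 c0 c1 (Fin Fs))
  (HC : Condition_C a b mu sigma x0 c0 c1)
  (HD : Condition_D a b mu sigma x0 stickya c0 Fs) :
  forall n : nat, (1 <= n)%nat ->
    in_classD a b mu sigma x0 stickya c0 (Gn a b mu sigma x0 c0 Fs n).
Proof.
  intros n Hn.
  assert (Hk : 0 < / INR n <= 1).
  { apply le_INR in Hn. simpl in Hn. split; [apply Rinv_0_lt_compat; lra|].
    rewrite <- Rinv_1. apply Rinv_le_contravar; lra. }
  exact (Gk_in_classD a b mu sigma x0 stickya c0 c1 Fs Hx0 Hmu Hsig Hsig0 HA HB HFs HC HD (/ INR n) Hk).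
Qed.
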